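(* Assume $n=1$, $\delta_1\in[0,1/2)$ and $\delta_1'\in[1/2,1)$. Then for each $T>0$ there is $\lambda_T>0$ such that \[ \int_{C_t}\Gamma_\delta(\varphi)(x)\,dx\ \ge\ \lambda_T\,t^{-2}\int_{C_t}\big(\varphi(x)-\langle\varphi\rangle\big)^2dx \] for all $\varphi\in C_c^1(\mathbb R^{1+m})$ and all $t\in(0,T]$, where $\langle\varphi\rangle=|C_t|^{-1}\int_{C_t}\varphi$.
   Context: Let $m\ge1$, $x=(x_1,x_2)\in\mathbb R\times\mathbb R^m$, $|\cdot|$ Euclidean norms and $|\cdot|_\infty$ the $\ell_\infty$-norm. For $a\ge0$, $a^{(\alpha,\alpha')}=a^\alpha$ if $a\le1$ and $a^{\alpha'}$ if $a\ge1$. Fix $\delta_1,\delta_1'\in[0,1)$, $\delta_2,\delta_2'\ge0$; $\Gamma_\delta(\varphi)(x)=|x_1|^{(2\delta_1,2\delta_1')}|\partial_{x_1}\varphi(x)|^2+|x_1|^{(2\delta_2,2\delta_2')}|\nabla_{x_2}\varphi(x)|^2$. Let $\alpha=(1-\delta_1)^{-1}$, $\alpha'=(1-\delta_1')^{-1}$, $\beta=(1+\delta_2-\delta_1)\alpha$, $\beta'=(1+\delta_2'-\delta_1')\alpha'$ and $C_t=\{x:|x_1|<t^{(\alpha,\alpha')},\ |x_2|_\infty<t^{(\beta,\beta')}\}$. *)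

From Stdlib Require Import Reals Lra Lia Classical ClassicalEpsilon.
Open Scope R_scope.

(** Points of R^{1+m} are encoded as [x : nat -> R]: coordinate 0 is x_1,
    coordinates 1..m are x_2; coordinates > m are irrelevant (functions on
    R^{1+m} are required not to depend on them). *)

Definition upd (x : nat -> R) (i : nat) (s : R) : nat -> R :=
  fun j => if Nat.eq_dec j i then s else x j.

(** total Riemann integral on [a,b] (0 if not Riemann integrable) *)
Definition Rint (f : R -> R) (a b : R) : R :=
  match excluded_middle_informative (inhabited (Riemann_integrable f a b)) with
  | left H => RiemannInt (epsilon H (fun _ => True))
  | right _ => 0
  end.

Fixpoint IntBox (k : nat) (lo hi : nat -> R) (f : (nat -> R) -> R)
  (x : nat -> R) : R :=
  match k with
  | O => f x
  | S k' => IntBox k' lo hi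
              (fun y => Rint (fun s => f (upd y k' s)) (lo k') (hi k')) x
  end.

(** a^p with the convention 0^0 = 1, 0^p = 0 for p <> 0 *)
Definition pw (a p : R) : R :=
  if Req_EM_T a 0 then (if Req_EM_T p 0 then 1 else 0) else Rpower a p.

Definition bpow (a p p' : R) : R := if Rle_dec a 1 then pw a p else pw a p'.

Fixpoint sum1 (k : nat) (f : nat -> R) : R :=
  match k with O => 0 | S k' => sum1 k' f + f k end.

Definition C1c (m : nat) (phi : (nat -> R) -> R) (D : nat -> (nat -> R) -> R)
  : Prop :=
  (forall x y, (forall i, (i <= m)%nat -> x i = y i) -> phi x = phi y) /\
  (forall i x, (i <= m)%nat ->
      derivable_pt_lim (fun s => phi (upd x i s)) (x i) (D i x)) /\
  (forall x eps, 0 < eps -> exists d, 0 < d /\ forall y,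
      (forall i, (i <= m)%nat -> Rabs (y i - x i) < d) ->
      Rabs (phi y - phi x) < eps) /\
  (forall j x eps, (j <= m)%nat -> 0 < eps -> exists d, 0 < d /\ forall y,
      (forall i, (i <= m)%nat -> Rabs (y i - x i) < d) ->
      Rabs (D j y - D j x) < eps) /\
  (exists R0, forall x, (exists i, (i <= m)%nat /\ R0 < Rabs (x i)) ->
      phi x = 0).

Definition Gamma (m : nat) (d1 d1' d2 d2' : R) (D : nat -> (nat -> R) -> R)
  (x : nat -> R) : R :=
  bpow (Rabs (x 0%nat)) (2 * d1) (2 * d1') * (D 0%nat x) ^ 2
  + bpow (Rabs (x 0%nat)) (2 * d2) (2 * d2') * sum1 m (fun i => (D i x) ^ 2).

Definition alpha (d : R) : R := / (1 - d).
Definition betaexp (d1 d2 : R) : R := (1 + d2 - d1) * alpha d1.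

Definition radA (d1 d1' t : R) : R := bpow t (alpha d1) (alpha d1').
Definition radB (d1 d1' d2 d2' t : R) : R :=
  bpow t (betaexp d1 d2) (betaexp d1' d2').

Definition IntC (m : nat) (d1 d1' d2 d2' t : R) (f : (nat -> R) -> R) : R :=
  IntBox (S m)
    (fun i => if Nat.eq_dec i 0 then - radA d1 d1' t else - radB d1 d1' d2 d2' t)
    (fun i => if Nat.eq_dec i 0 then radA d1 d1' t else radB d1 d1' d2 d2' t)
    f (fun _ => 0).

Definition volC (m : nat) (d1 d1' d2 d2' t : R) : R :=
  (2 * radA d1 d1' t) * (2 * radB d1 d1' d2 d2' t) ^ m.

(** The engine is a tensorization step on a product box: comparing [φ] with
    the mean, over a window [[zl,zh]] of its outer coordinate, of the slice
    means splits the variance into a one-dimensional oscillation term in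
    that coordinate and the average of the slice variances.
    - In the x_2 coordinates the unweighted oscillation bound
      [(g s - g z)^2 <= 2b ∫ g'^2] and induction on the number of
      coordinates give a Poincaré inequality with constant [K_m b^2].
    - In x_1 Cauchy–Schwarz against the weight [|r|^{(2δ1,2δ1')}] gives the
      oscillation bound [4 (a^q/q + a) ∫ |r|^{(2δ1,2δ1')} g'^2], [q = 1 - 2δ1],
      which is where [δ1 < 1/2] enters; the window [[a/2,a]] keeps the
      x_2-weight [|x_1|^{(2δ2,2δ2')}] bounded below by [min(a/2,1/2)^{2δ2}].
    - Finally the exponents make both resulting constants [O(t^2)] on (0,T]. *)

From Stdlib Require Import Reals Lra Lia Classical ClassicalEpsilon FunctionalExtensionality.
From Coquelicot Require Import Coquelicot.
Open Scope R_scope.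

(** Real-valued instances of Coquelicot's integral algebra: stated with
    [Rplus]/[Rmult] instead of the module operations [plus]/[scal], so that
    they can be used by rewriting. *)
Lemma ex_RInt_Rplus f g a b :
  ex_RInt f a b -> ex_RInt g a b -> ex_RInt (fun x => f x + g x) a b.
Proof. intros. apply (ex_RInt_plus (V:=R_NormedModule) f g); auto. Qed.
Lemma ex_RInt_Rminus f g a b :
  ex_RInt f a b -> ex_RInt g a b -> ex_RInt (fun x => f x - g x) a b.
Proof. intros. apply (ex_RInt_minus (V:=R_NormedModule) f g); auto. Qed.
Lemma ex_RInt_Rscal f c a b : ex_RInt f a b -> ex_RInt (fun x => c * f x) a b.
Proof. intros. apply (ex_RInt_scal (V:=R_NormedModule) f); auto. Qed.
Lemma RInt_Rplus f g a b : ex_RInt f a b -> ex_RInt g a b ->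
  RInt (fun x => f x + g x) a b = RInt f a b + RInt g a b.
Proof. intros. apply (RInt_plus (V:=R_CompleteNormedModule) f g); auto. Qed.
Lemma RInt_Rminus f g a b : ex_RInt f a b -> ex_RInt g a b ->
  RInt (fun x => f x - g x) a b = RInt f a b - RInt g a b.
Proof. intros. apply (RInt_minus (V:=R_CompleteNormedModule) f g); auto. Qed.
Lemma RInt_Rscal f c a b : ex_RInt f a b -> RInt (fun x => c * f x) a b = c * RInt f a b.
Proof. intros. apply (RInt_scal (V:=R_CompleteNormedModule) f); auto. Qed.
Lemma RInt_Rconst c a b : RInt (fun _ => c) a b = (b - a) * c.
Proof. rewrite RInt_const. reflexivity. Qed.
Lemma RInt_Rchasles f a b c : ex_RInt f a b -> ex_RInt f b c ->
  RInt f a b + RInt f b c = RInt f a c.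
Proof. intros. apply (RInt_Chasles (V:=R_CompleteNormedModule)); auto. Qed.
Lemma RInt_Rpoint f a : RInt f a a = 0.
Proof. apply (RInt_point (V:=R_CompleteNormedModule)). Qed.
Lemma RInt_Rswap f a b : ex_RInt f a b -> RInt f b a = - RInt f a b.
Proof. intros H. rewrite <- (opp_RInt_swap (V:=R_CompleteNormedModule) f a b H). reflexivity. Qed.

Lemma Rint_RInt f a b : ex_RInt f a b -> Rint f a b = RInt f a b.
Proof.
  intros H. unfold Rint. destruct excluded_middle_informative as [i|n].
  - rewrite (RInt_Reals f a b (epsilon i (fun _ => True))). reflexivity.
  - exfalso. apply n. constructor. apply ex_RInt_Reals_0; exact H.
Qed.

Lemma cpt_plus f g x :
  continuity_pt f x -> continuity_pt g x -> continuity_pt (fun r => f r + g r) x.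
Proof. intros. exact (continuity_pt_plus f g x H H0). Qed.
Lemma cpt_minus f g x :
  continuity_pt f x -> continuity_pt g x -> continuity_pt (fun r => f r - g r) x.
Proof. intros. exact (continuity_pt_minus f g x H H0). Qed.
Lemma cpt_mult f g x :
  continuity_pt f x -> continuity_pt g x -> continuity_pt (fun r => f r * g r) x.
Proof. intros. exact (continuity_pt_mult f g x H H0). Qed.
Lemma cpt_inv f x : continuity_pt f x -> f x <> 0 -> continuity_pt (fun r => / f r) x.
Proof. intros. exact (continuity_pt_inv f x H H0). Qed.
Lemma cpt_const c x : continuity_pt (fun _ => c) x.
Proof. apply continuity_pt_const. intros a b; reflexivity. Qed.
Lemma cpt_id x : continuity_pt (fun r => r) x.
Proof. apply derivable_continuous_pt. exists 1. apply derivable_pt_lim_id. Qed.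
Lemma cpt_scal c f x : continuity_pt f x -> continuity_pt (fun r => c * f r) x.
Proof. intros. apply cpt_mult; auto. apply cpt_const. Qed.
Lemma cpt_sq f x : continuity_pt f x -> continuity_pt (fun r => f r ^ 2) x.
Proof. intros. simpl. apply cpt_mult; auto. apply cpt_mult; auto. apply cpt_const. Qed.

Lemma ex_RInt_cont_on f u v :
  u <= v -> (forall r, u <= r <= v -> continuity_pt f r) -> ex_RInt f u v.
Proof.
  intros Huv H. apply (@ex_RInt_continuous R_CompleteNormedModule). intros z Hz.
  apply continuity_pt_filterlim. apply H. rewrite Rmin_left, Rmax_right in Hz; auto.
Qed.

Lemma ex_RInt_cont f a b : (forall s, continuity_pt f s) -> ex_RInt f a b.
Proof.
  intros H. apply (@ex_RInt_continuous R_CompleteNormedModule). intros z _.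
  apply continuity_pt_filterlim. apply H.
Qed.

(** * Continuity of integrals depending on a parameter

    A parameter space is a type [P] with a family of "neighbourhoods"
    [near p0 r p] ("p is r-close to p0") that is reflexive and increasing in
    the radius.  [jointly_continuous near H] says that [H s p] is continuous
    in the pair [(s, p)]. *)
Definition jointly_continuous {P : Type} (near : P -> R -> P -> Prop) (H : R -> P -> R) :=
  forall s0 p0 eps, 0 < eps -> exists d, 0 < d /\ forall s p,
    Rabs (s - s0) < d -> near p0 d p -> Rabs (H s p - H s0 p0) < eps.

Definition nearness {P : Type} (near : P -> R -> P -> Prop) :=
  (forall p r, 0 < r -> near p r p) /\
  (forall p0 r r' p, r <= r' -> near p0 r p -> near p0 r' p).

Section ParameterIntegrals.
Context {P : Type} (near : P -> R -> P -> Prop) (H : R -> P -> R).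
Hypothesis Hnear : nearness near.
Hypothesis Hjoint : jointly_continuous near H.

Lemma slice_continuous p s0 : continuity_pt (fun s => H s p) s0.
Proof.
  destruct Hnear as [Hrefl _]. unfold continuity_pt, continue_in, limit1_in, limit_in.
  intros eps He. destruct (Hjoint s0 p eps He) as [d [Hd Hd']].
  exists d. split; [exact Hd|]. intros x [_ Hx]. simpl in *. unfold R_dist in *.
  apply Hd'; [exact Hx| apply Hrefl; exact Hd].
Qed.

(** Compactness of [a,b] makes the continuity in [p] uniform in [s]. *)
Lemma uniform_continuity_on_segment a b p0 eps : 0 < eps ->
  exists d, 0 < d /\ forall s p, a <= s <= b -> near p0 d p ->
    Rabs (H s p - H s p0) < eps.
Proof.
  destruct Hnear as [Hrefl Hmono]. intros He.
  assert (Hd : forall t, {d : posreal | forall s p, Rabs (s - t) < d ->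
     near p0 d p -> Rabs (H s p - H t p0) < eps/2}).
  { intros t. apply constructive_indefinite_description.
    destruct (Hjoint t p0 (eps/2)) as [d [Hd Hd']]; [lra|].
    exists (mkposreal d Hd). exact Hd'. }
  destruct (compactness_value_1d a b (fun t => proj1_sig (Hd t))) as [d Hd2].
  exists d. split; [apply cond_pos|].
  intros s p Hs Hp.
  apply NNPP. intros Hcon. apply (Hd2 s Hs). intros [t [Ht [Hst Hdt]]]. apply Hcon.
  pose proof (proj2_sig (Hd t)) as HH. simpl in HH.
  assert (A1 := HH s p Hst (Hmono _ _ _ _ Hdt Hp)).
  assert (A2 := HH s p0 Hst (Hrefl _ _ (cond_pos _))).
  pose proof (Rabs_triang (H s p - H t p0) (-(H s p0 - H t p0))) as T.
  rewrite Rabs_Ropp in T.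
  replace (H s p - H t p0 + - (H s p0 - H t p0)) with (H s p - H s p0) in T by ring.
  lra.
Qed.

Lemma RInt_param_continuous_ordered a b p0 eps : a <= b -> 0 < eps ->
  exists d, 0 < d /\ forall p, near p0 d p ->
    Rabs (RInt (fun s => H s p) a b - RInt (fun s => H s p0) a b) < eps.
Proof.
  intros Hab He.
  destruct (uniform_continuity_on_segment a b p0 (eps / (b - a + 1))) as [d [Hd Hd']].
  { apply Rdiv_lt_0_compat; lra. }
  exists d. split; [exact Hd|]. intros p Hp.
  assert (E1 : ex_RInt (fun s => H s p) a b) by (apply ex_RInt_cont; intros; apply slice_continuous).
  assert (E2 : ex_RInt (fun s => H s p0) a b) by (apply ex_RInt_cont; intros; apply slice_continuous).
  rewrite <- (RInt_Rminus _ _ _ _ E1 E2).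
  eapply Rle_lt_trans.
  - apply (abs_RInt_le_const _ a b (eps / (b - a + 1))); [exact Hab| |].
    + apply ex_RInt_Rminus; assumption.
    + intros t Ht. left. apply Hd'; assumption.
  - unfold Rdiv. rewrite <- Rmult_assoc.
    apply (Rmult_lt_reg_r (b - a + 1)); [lra|].
    rewrite Rmult_assoc, Rinv_l by lra. nra.
Qed.

Lemma RInt_param_continuous a b p0 eps : 0 < eps ->
  exists d, 0 < d /\ forall p, near p0 d p ->
    Rabs (RInt (fun s => H s p) a b - RInt (fun s => H s p0) a b) < eps.
Proof.
  intros He. destruct (Rle_dec a b) as [Hab|Hab].
  - apply RInt_param_continuous_ordered; auto.
  - destruct (RInt_param_continuous_ordered b a p0 eps) as [d [Hd Hd']]; [lra|auto|].
    exists d. split; auto. intros p Hp.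
    rewrite (RInt_Rswap (fun s => H s p)), (RInt_Rswap (fun s => H s p0))
      by (apply ex_RInt_cont; intros; apply slice_continuous).
    replace (- RInt (fun s => H s p) b a - - RInt (fun s => H s p0) b a)
      with (- (RInt (fun s => H s p) b a - RInt (fun s => H s p0) b a)) by ring.
    rewrite Rabs_Ropp. auto.
Qed.

End ParameterIntegrals.

Definition nearR (u0 r u : R) : Prop := Rabs (u - u0) < r.
Definition nearM (m : nat) (y0 : nat -> R) (r : R) (y : nat -> R) : Prop :=
  forall i, (i <= m)%nat -> Rabs (y i - y0 i) < r.

Lemma nearR_nearness : nearness nearR.
Proof. split; unfold nearR; intros. - rewrite Rminus_diag, Rabs_R0; lra. - lra. Qed.

Lemma nearM_nearness m : nearness (nearM m).
Proof. split; unfold nearM; intros.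
  - rewrite Rminus_diag, Rabs_R0; lra. - specialize (H0 i H1); lra. Qed.

Lemma RInt_param_continuous_R H a b u0 : jointly_continuous nearR H ->
  continuity_pt (fun u => RInt (fun s => H s u) a b) u0.
Proof.
  intros Hj. unfold continuity_pt, continue_in, limit1_in, limit_in.
  intros eps He.
  destruct (RInt_param_continuous nearR H nearR_nearness Hj a b u0 eps He) as [d [Hd Hd']].
  exists d. split; auto. intros x [_ Hx]. simpl in *. unfold R_dist in *. apply Hd'. exact Hx.
Qed.

(** * Fubini's theorem for jointly continuous functions on a rectangle

    Both iterated integrals, as functions of the upper limit [x] of the
    outer variable, have derivative [RInt (H x .) c d] and vanish at [a]. *)
Section Fubini.
Variable H : R -> R -> R.
Hypothesis Hjoint : jointly_continuous nearR H.

Let Hswap : jointly_continuous nearR (fun u s => H s u).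
Proof.
  intros s0 u0 eps He. destruct (Hjoint u0 s0 eps He) as [d [Hd Hd']].
  exists d. split; auto.
Qed.

Let cont_in_s u s : continuity_pt (fun s => H s u) s.
Proof. exact (slice_continuous nearR H nearR_nearness Hjoint u s). Qed.

Lemma is_derive_RInt_upper f a x : (forall r, continuity_pt f r) ->
  is_derive (fun y => RInt f a y) x (f x).
Proof.
  intros Hf. apply (is_derive_RInt (V:=R_NormedModule) f _ a x).
  - apply filter_forall. intros y. apply (RInt_correct (V:=R_CompleteNormedModule)).
    apply ex_RInt_cont; auto.
  - apply continuity_pt_filterlim; auto.
Qed.

Lemma is_derive_RInt_inner_upper a c d x :
  is_derive (fun y => RInt (fun u => RInt (fun s => H s u) a y) c d) x
            (RInt (fun u => H x u) c d).
Proof.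
  assert (Dder : forall y v, Derive (fun z => RInt (fun s => H s v) a z) y = H y v).
  { intros y v. apply (Derive_RInt (fun s => H s v) a y).
    - apply filter_forall. intros z. apply ex_RInt_cont. auto.
    - apply continuity_pt_filterlim; auto. }
  replace (RInt (fun u => H x u) c d)
    with (RInt (fun t => Derive (fun y => RInt (fun s => H s t) a y) x) c d)
    by (apply RInt_ext; intros; rewrite Dder; reflexivity).
  apply (is_derive_RInt_param (fun z v => RInt (fun s => H s v) a z)).
  - apply filter_forall. intros y t _. eexists. apply is_derive_RInt_upper. auto.
  - intros t _ eps.
    destruct (Hjoint x t eps (cond_pos eps)) as [dl [Hdl Hdl']].
    exists (mkposreal dl Hdl). intros u v Hu Hv. rewrite !Dder. apply Hdl'; auto.
  - apply filter_forall. intros y. apply ex_RInt_cont. intros u.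
    apply (RInt_param_continuous_R H a y u Hjoint).
Qed.

Lemma fubini_rectangle a b c d :
  RInt (fun s => RInt (fun u => H s u) c d) a b =
  RInt (fun u => RInt (fun s => H s u) a b) c d.
Proof.
  set (Phi := fun x => RInt (fun s => RInt (fun u => H s u) c d) a x).
  set (Psi := fun x => RInt (fun u => RInt (fun s => H s u) a x) c d).
  assert (Hdiff : forall x, is_derive (fun z => Phi z - Psi z) x 0).
  { intros x. replace 0 with (@minus R_NormedModule (RInt (fun u => H x u) c d)
                                              (RInt (fun u => H x u) c d))
      by apply (minus_eq_zero (G:=R_AbsRing)).
    apply (is_derive_minus (V:=R_NormedModule)).
    - apply (is_derive_RInt_upper (fun s => RInt (fun u => H s u) c d)). intros s.
      apply (RInt_param_continuous_R (fun u s => H s u) c d s Hswap).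
    - exact (is_derive_RInt_inner_upper a c d x). }
  assert (Hconst : forall x y, x < y -> Phi x - Psi x = Phi y - Psi y).
  { intros x y Hxy. apply (eq_is_derive (V:=R_NormedModule) (fun z => Phi z - Psi z) x y); auto. }
  assert (Ha : Phi a - Psi a = 0).
  { unfold Phi, Psi. rewrite RInt_Rpoint.
    rewrite (RInt_ext (V:=R_CompleteNormedModule) _ (fun _ => 0)) by (intros; apply RInt_Rpoint).
    rewrite RInt_Rconst. ring. }
  assert (Hb : Phi b - Psi b = 0).
  { destruct (Rtotal_order a b) as [Hab|[Hab|Hab]].
    - rewrite <- (Hconst a b Hab); auto.
    - rewrite <- Hab; exact Ha.
    - rewrite (Hconst b a Hab); auto. }
  exact (Rminus_diag_uniq _ _ Hb).
Qed.

End Fubini.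

(** * Functions of the first m+1 coordinates *)

Lemma upd_eq y i s : upd y i s i = s.
Proof. unfold upd. destruct Nat.eq_dec; congruence. Qed.
Lemma upd_neq y i j s : j <> i -> upd y i s j = y j.
Proof. unfold upd. destruct Nat.eq_dec; congruence. Qed.
Lemma upd_upd y i s r : upd (upd y i s) i r = upd y i r.
Proof. extensionality j. unfold upd. destruct Nat.eq_dec; auto. Qed.
Lemma upd_comm y i j s r : i <> j -> upd (upd y i s) j r = upd (upd y j r) i s.
Proof. intros. extensionality k. unfold upd. repeat destruct Nat.eq_dec; subst; auto. congruence. Qed.

Definition Cont (m : nat) (F : (nat -> R) -> R) : Prop :=
  forall x eps, 0 < eps -> exists d, 0 < d /\ forall y, nearM m x d y ->
    Rabs (F y - F x) < eps.

Section Continuity.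
Variable m : nat.

Lemma Cont_const c : Cont m (fun _ => c).
Proof. intros x eps He. exists 1. split; [lra|]. intros. rewrite Rminus_diag, Rabs_R0; auto. Qed.

Lemma Cont_coord i : (i <= m)%nat -> Cont m (fun y => y i).
Proof. intros Hi x eps He. exists eps. split; auto. Qed.

Lemma Cont_plus F G : Cont m F -> Cont m G -> Cont m (fun y => F y + G y).
Proof.
  intros HF HG x eps He.
  destruct (HF x (eps/2)) as [d1 [H1 H1']]; [lra|].
  destruct (HG x (eps/2)) as [d2 [H2 H2']]; [lra|].
  exists (Rmin d1 d2). split. apply Rmin_pos; auto.
  intros y Hy.
  assert (A := H1' y (fun i Hi => Rlt_le_trans _ _ _ (Hy i Hi) (Rmin_l _ _))).
  assert (B := H2' y (fun i Hi => Rlt_le_trans _ _ _ (Hy i Hi) (Rmin_r _ _))).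
  pose proof (Rabs_triang (F y - F x) (G y - G x)).
  replace (F y + G y - (F x + G x)) with (F y - F x + (G y - G x)) by ring. lra.
Qed.

Lemma Cont_comp (h : R -> R) F : Cont m F -> (forall r, continuity_pt h r) ->
  Cont m (fun y => h (F y)).
Proof.
  intros HF Hh x eps He.
  destruct (Hh (F x) eps He) as [d1 [H1 H1']].
  destruct (HF x d1 H1) as [d [Hd Hd']].
  exists d. split; auto. intros y Hy.
  destruct (Req_dec (F y) (F x)) as [E|E].
  - rewrite E, Rminus_diag, Rabs_R0; auto.
  - apply (H1' (F y)). split.
    + split. exact I. auto.
    + simpl. unfold R_dist. apply Hd'; auto.
Qed.

Lemma Cont_scal c F : Cont m F -> Cont m (fun y => c * F y).
Proof. intros. apply (Cont_comp (fun r => c * r)); auto. intros r. reg. Qed.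

Lemma Cont_sq F : Cont m F -> Cont m (fun y => F y ^ 2).
Proof. intros. apply (Cont_comp (fun r => r ^ 2)); auto. intros r. reg. Qed.

Lemma Cont_minus F G : Cont m F -> Cont m G -> Cont m (fun y => F y - G y).
Proof. intros. unfold Rminus. apply Cont_plus; auto. apply (Cont_comp Ropp); auto. intros; reg. Qed.

(** Products, by polarization: [F G = ((F + G)^2 - (F - G)^2) / 4]. *)
Lemma Cont_mult F G : Cont m F -> Cont m G -> Cont m (fun y => F y * G y).
Proof.
  intros HF HG.
  assert (C : Cont m (fun y => / 4 * ((F y + G y) ^ 2 - (F y - G y) ^ 2))).
  { apply Cont_scal. apply Cont_minus; apply Cont_sq;
      [apply Cont_plus | apply Cont_minus]; auto. }
  intros x eps He. destruct (C x eps He) as [d [Hd Hd']]. exists d. split; auto.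
  intros y Hy. specialize (Hd' y Hy).
  replace (F y * G y - F x * G x)
    with (/ 4 * ((F y + G y) ^ 2 - (F y - G y) ^ 2)
          - / 4 * ((F x + G x) ^ 2 - (F x - G x) ^ 2)) by field.
  exact Hd'.
Qed.

Lemma Cont_slice_joint F k : Cont m F -> (k <= m)%nat ->
  jointly_continuous (nearM m) (fun s y => F (upd y k s)).
Proof.
  intros HF Hk s0 y0 eps He. destruct (HF (upd y0 k s0) eps He) as [d [Hd Hd']].
  exists d. split; [exact Hd|]. intros s y Hs Hy. apply Hd'.
  intros i Hi. unfold upd. destruct Nat.eq_dec; [exact Hs| apply Hy; exact Hi].
Qed.

Lemma Cont_slice F k y : Cont m F -> (k <= m)%nat ->
  forall s, continuity_pt (fun s => F (upd y k s)) s.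
Proof.
  intros HF Hk s.
  exact (slice_continuous _ _ (nearM_nearness m) (Cont_slice_joint F k HF Hk) y s).
Qed.

Lemma Cont_ex_RInt F k y a b : Cont m F -> (k <= m)%nat ->
  ex_RInt (fun s => F (upd y k s)) a b.
Proof. intros. apply ex_RInt_cont. apply Cont_slice; auto. Qed.

Lemma Cont_Rint F k y a b : Cont m F -> (k <= m)%nat ->
  Rint (fun s => F (upd y k s)) a b = RInt (fun s => F (upd y k s)) a b.
Proof. intros. apply Rint_RInt. apply Cont_ex_RInt; auto. Qed.

Lemma Cont_param F k a b : Cont m F -> (k <= m)%nat ->
  Cont m (fun y => Rint (fun s => F (upd y k s)) a b).
Proof.
  intros HF Hk x eps He.
  destruct (RInt_param_continuous (nearM m) (fun s y => F (upd y k s)) (nearM_nearness m)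
              (Cont_slice_joint F k HF Hk) a b x eps He) as [d [Hd Hd']].
  exists d. split; auto. intros y Hy. rewrite !Cont_Rint; auto.
Qed.

Lemma Rint_plus_slice F G k y a b : Cont m F -> Cont m G -> (k <= m)%nat ->
  Rint (fun s => F (upd y k s) + G (upd y k s)) a b =
  Rint (fun s => F (upd y k s)) a b + Rint (fun s => G (upd y k s)) a b.
Proof.
  intros HF HG Hk. rewrite Rint_RInt.
  2: apply (Cont_ex_RInt (fun z => F z + G z)); auto; apply Cont_plus; auto.
  rewrite !Cont_Rint by auto. apply RInt_Rplus; apply Cont_ex_RInt; auto.
Qed.

Lemma Rint_scal_slice c F k y a b : Cont m F -> (k <= m)%nat ->
  Rint (fun s => c * F (upd y k s)) a b = c * Rint (fun s => F (upd y k s)) a b.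
Proof.
  intros HF Hk. rewrite Rint_RInt.
  2: apply (Cont_ex_RInt (fun z => c * F z)); auto; apply Cont_scal; auto.
  rewrite !Cont_Rint by auto. apply RInt_Rscal; apply Cont_ex_RInt; auto.
Qed.

Lemma Rint_le_slice F G k y a b : Cont m F -> Cont m G -> (k <= m)%nat -> a <= b ->
  (forall s, a <= s <= b -> F (upd y k s) <= G (upd y k s)) ->
  Rint (fun s => F (upd y k s)) a b <= Rint (fun s => G (upd y k s)) a b.
Proof.
  intros HF HG Hk Hab H. rewrite !Cont_Rint by auto.
  apply RInt_le; auto; try (apply Cont_ex_RInt; auto). intros; apply H; lra.
Qed.

Lemma Rint_swap_coords F j k y a b c d : Cont m F -> (j <= m)%nat -> (k <= m)%nat -> j <> k ->
  RInt (fun s => RInt (fun u => F (upd (upd y j s) k u)) c d) a b =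
  RInt (fun u => RInt (fun s => F (upd (upd y j s) k u)) a b) c d.
Proof.
  intros HF Hj Hk Hjk. apply (fubini_rectangle (fun s u => F (upd (upd y j s) k u))).
  intros s0 u0 eps He. destruct (HF (upd (upd y j s0) k u0) eps He) as [r [Hr Hr']].
  exists r. split; auto. intros s u Hs Hu. apply Hr'. intros i Hi. unfold nearR in Hu.
  unfold upd. repeat destruct Nat.eq_dec; subst; auto; try congruence;
    rewrite Rminus_diag, Rabs_R0; auto.
Qed.

End Continuity.

(** * Iterated integrals over boxes

    [IB lo hi j n F x] integrates [F] over the coordinates [j, ..., j+n-1]
    (coordinate [i] ranging over [[lo i, hi i]]), the others being taken
    from [x]; [IntBox k] is the case [j = 0, n = k].  [PL lo hi j n] is the
    volume of the box. *)
Fixpoint IB (lo hi : nat -> R) (j n : nat) (F : (nat -> R) -> R) (x : nat -> R) : R :=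
  match n with
  | O => F x
  | S n' => IB lo hi j n'
      (fun y => Rint (fun s => F (upd y (j + n')%nat s)) (lo (j + n')%nat) (hi (j + n')%nat)) x
  end.

Fixpoint PL (lo hi : nat -> R) (j n : nat) : R :=
  match n with O => 1 | S n' => PL lo hi j n' * (hi (j + n')%nat - lo (j + n')%nat) end.

Lemma IntBox_IB k lo hi f x : IntBox k lo hi f x = IB lo hi 0 k f x.
Proof. revert f. induction k; intros f; simpl; auto. Qed.

Lemma IB_peel lo hi j n F x :
  IB lo hi j (S n) F x = Rint (fun s => IB lo hi (S j) n F (upd x j s)) (lo j) (hi j).
Proof.
  revert F. induction n; intros F.
  - simpl. rewrite Nat.add_0_r. reflexivity.
  - change (IB lo hi j (S (S n)) F x) with
      (IB lo hi j (S n) (fun y => Rint (fun s => F (upd y (j + S n)%nat s))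
                                      (lo (j + S n)%nat) (hi (j + S n)%nat)) x).
    rewrite IHn. simpl. replace (j + S n)%nat with (S (j + n)%nat) by lia. reflexivity.
Qed.

Lemma IB_upd lo hi j n F z x :
  IB lo hi (S j) n (fun y => F (upd y j z)) x = IB lo hi (S j) n F (upd x j z).
Proof.
  revert F. induction n; intros F; simpl; auto.
  rewrite <- IHn. f_equal. extensionality y. f_equal. extensionality s.
  rewrite upd_comm; auto. lia.
Qed.

Lemma IB_ext lo hi j n F G x :
  (forall y, (forall i, (i < j)%nat -> y i = x i) -> F y = G y) ->
  IB lo hi j n F x = IB lo hi j n G x.
Proof.
  revert F G. induction n; intros F G H; simpl.
  - apply H. auto.
  - apply IHn. intros y Hy. f_equal. extensionality s. apply H.
    intros i Hi. rewrite upd_neq by lia. auto.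
Qed.

Lemma IB_const lo hi j n c x : IB lo hi j n (fun _ => c) x = c * PL lo hi j n.
Proof.
  revert c. induction n; intros c; simpl. - ring.
  - rewrite (IB_ext lo hi j n _ (fun _ => (hi (j+n)%nat - lo (j+n)%nat) * c)).
    + rewrite IHn. ring.
    + intros y _. rewrite Rint_RInt. apply RInt_Rconst. apply ex_RInt_const.
Qed.


Section BoxIntegral.
Variable m : nat.
Variables lo hi : nat -> R.
Hypothesis Hlh : forall i, lo i <= hi i.

Lemma IB_Cont j n F : (j + n <= S m)%nat -> Cont m F -> Cont m (IB lo hi j n F).
Proof.
  revert F. induction n; intros F Hn HF; simpl; auto.
  apply IHn; [lia|]. apply Cont_param; auto. lia.
Qed.

Lemma IB_plus j n F G x : (j + n <= S m)%nat -> Cont m F -> Cont m G ->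
  IB lo hi j n (fun y => F y + G y) x = IB lo hi j n F x + IB lo hi j n G x.
Proof.
  revert F G. induction n; intros F G Hn HF HG; simpl; auto.
  rewrite <- IHn; try (apply Cont_param; auto; lia); try lia.
  apply IB_ext. intros y _. apply (Rint_plus_slice m); auto. lia.
Qed.

Lemma IB_scal j n c F x : (j + n <= S m)%nat -> Cont m F ->
  IB lo hi j n (fun y => c * F y) x = c * IB lo hi j n F x.
Proof.
  revert F. induction n; intros F Hn HF; simpl; auto.
  rewrite <- IHn; try (apply Cont_param; auto; lia); try lia.
  apply IB_ext. intros y _. apply (Rint_scal_slice m); auto. lia.
Qed.

Lemma IB_mono j n F G x : (j + n <= S m)%nat -> Cont m F -> Cont m G ->
  (forall y, F y <= G y) -> IB lo hi j n F x <= IB lo hi j n G x.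
Proof.
  revert F G. induction n; intros F G Hn HF HG H; simpl; auto.
  apply IHn; try (apply Cont_param; auto; lia); try lia.
  intros y. apply (Rint_le_slice m); auto. lia.
Qed.

Lemma IB_nonneg j n F x : (j + n <= S m)%nat -> Cont m F -> (forall y, 0 <= F y) ->
  0 <= IB lo hi j n F x.
Proof.
  intros Hn HF H. assert (A := IB_mono j n (fun _ => 0) F x Hn (Cont_const m 0) HF H).
  rewrite IB_const in A. lra.
Qed.

Lemma IB_fubini j n F x a b : (j + S n <= S m)%nat -> Cont m F ->
  Rint (fun s => IB lo hi (S j) n F (upd x j s)) a b =
  IB lo hi (S j) n (fun y => Rint (fun s => F (upd y j s)) a b) x.
Proof.
  revert F. induction n; intros F Hn HF; simpl; auto.
  rewrite IHn; try lia; auto. 2: apply Cont_param; auto; lia.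
  apply IB_ext. intros y _.
  set (k := (S (j + n))%nat).
  assert (Hk : (k <= m)%nat) by (unfold k; lia). assert (Hjk : j <> k) by (unfold k; lia).
  transitivity (RInt (fun s => RInt (fun u => F (upd (upd y j s) k u)) (lo k) (hi k)) a b).
  { rewrite Rint_RInt.
    - apply RInt_ext. intros. apply (Cont_Rint m); auto.
    - apply (Cont_ex_RInt m (fun z => Rint (fun u => F (upd z k u)) (lo k) (hi k))); auto.
      apply Cont_param; auto. lia. }
  rewrite (Rint_swap_coords m F j k y); auto; try lia.
  rewrite Rint_RInt.
  - apply RInt_ext. intros u _. rewrite (Cont_Rint m); auto; try lia.
    f_equal. extensionality s. rewrite upd_comm; auto.
  - apply (Cont_ex_RInt m (fun z => Rint (fun s => F (upd z j s)) a b)); auto.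
    apply Cont_param; auto. lia.
Qed.

Lemma IB_fubini_peel j n F x : (j + S n <= S m)%nat -> Cont m F ->
  IB lo hi (S j) n (fun y => Rint (fun s => F (upd y j s)) (lo j) (hi j)) x = IB lo hi j (S n) F x.
Proof. intros. rewrite IB_peel, IB_fubini; auto. Qed.

Lemma IB_sq_dev j n F c x : (j + n <= S m)%nat -> Cont m F ->
  IB lo hi j n (fun y => (F y - c) ^ 2) x =
  IB lo hi j n (fun y => F y ^ 2) x + (-2 * c) * IB lo hi j n F x + c ^ 2 * PL lo hi j n.
Proof.
  intros Hn HF.
  rewrite (IB_ext lo hi j n _ (fun y => (F y ^ 2 + (-2 * c) * F y) + c ^ 2)) by (intros; ring).
  assert (C1 : Cont m (fun y => F y ^ 2)) by (apply Cont_sq; auto).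
  assert (C2 : Cont m (fun y => -2 * c * F y)) by (apply Cont_scal; auto).
  rewrite IB_plus by (auto; apply Cont_plus || apply Cont_const; auto).
  rewrite IB_plus, IB_scal, IB_const by auto. ring.
Qed.

Lemma IB_mean_minimizes j n F c x : (j + n <= S m)%nat -> Cont m F -> 0 < PL lo hi j n ->
  IB lo hi j n (fun y => (F y - IB lo hi j n F x / PL lo hi j n) ^ 2) x
  <= IB lo hi j n (fun y => (F y - c) ^ 2) x.
Proof.
  intros Hn HF HP. rewrite !IB_sq_dev by auto.
  set (P := PL lo hi j n) in *. set (I := IB lo hi j n F x).
  set (C0 := I / P). assert (EI : I = C0 * P) by (unfold C0; field; lra). rewrite EI.
  assert (0 <= (C0 - c) ^ 2 * P) by (apply Rmult_le_pos; [apply pow2_ge_0|lra]).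
  replace (-2 * c * (C0 * P) + c ^ 2 * P)
    with (-2 * C0 * (C0 * P) + C0 ^ 2 * P + (C0 - c) ^ 2 * P) by ring.
  lra.
Qed.

End BoxIntegral.

(** * One-dimensional integral inequalities *)

Lemma RInt_nonneg f u v : u <= v -> (forall r, u <= r <= v -> continuity_pt f r) ->
  (forall r, u <= r <= v -> 0 <= f r) -> 0 <= RInt f u v.
Proof. intros. apply RInt_ge_0; auto. apply ex_RInt_cont_on; auto. intros; apply H1; lra. Qed.

Lemma RInt_subinterval f lo hi u v : lo <= u -> u <= v -> v <= hi ->
  (forall r, lo <= r <= hi -> continuity_pt f r) ->
  (forall r, lo <= r <= hi -> 0 <= f r) -> RInt f u v <= RInt f lo hi.
Proof.
  intros H1 H2 H3 Hc Hp.
  assert (X : forall a b, lo <= a -> a <= b -> b <= hi -> ex_RInt f a b).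
  { intros. apply ex_RInt_cont_on; auto. intros; apply Hc; lra. }
  rewrite <- (RInt_Rchasles f lo u hi); auto; try (apply X; lra).
  rewrite <- (RInt_Rchasles f u v hi); auto; try (apply X; lra).
  assert (0 <= RInt f lo u) by (apply RInt_nonneg; auto; intros; [apply Hc|apply Hp]; lra).
  assert (0 <= RInt f v hi) by (apply RInt_nonneg; auto; intros; [apply Hc|apply Hp]; lra).
  lra.
Qed.

Lemma RInt_le_const f u v M : u <= v -> (forall r, u <= r <= v -> continuity_pt f r) ->
  (forall r, u <= r <= v -> f r <= M) -> RInt f u v <= (v - u) * M.
Proof.
  intros. rewrite <- RInt_Rconst. apply RInt_le; auto. apply ex_RInt_cont_on; auto.
  apply ex_RInt_const. intros; apply H1; lra.
Qed.

Lemma FTC_segment g g' u v : u <= v ->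
  (forall r, u <= r <= v -> derivable_pt_lim g r (g' r)) ->
  (forall r, u <= r <= v -> continuity_pt g' r) ->
  RInt g' u v = g v - g u.
Proof.
  intros Huv Hd Hc. apply is_RInt_unique.
  apply (is_RInt_derive (V:=R_CompleteNormedModule) g g').
  - intros. apply is_derive_Reals. apply Hd. rewrite Rmin_left, Rmax_right in H; auto.
  - intros. apply continuity_pt_filterlim. apply Hc. rewrite Rmin_left, Rmax_right in H; auto.
Qed.

Lemma nonneg_quadratic_discriminant A B C : 0 < C ->
  (forall l, 0 <= A + (-2 * l) * B + l ^ 2 * C) -> B ^ 2 <= A * C.
Proof.
  intros HC H. specialize (H (B / C)).
  replace (A + -2 * (B / C) * B + (B / C) ^ 2 * C) with ((A * C - B ^ 2) / C) in H by (field; lra).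
  assert (0 <= A * C - B ^ 2).
  { apply (Rmult_le_reg_r (/ C)). apply Rinv_0_lt_compat; auto. rewrite Rmult_0_l. exact H. }
  lra.
Qed.

Lemma cauchy_schwarz_weighted h w u v : u <= v ->
  (forall r, u <= r <= v -> continuity_pt h r) ->
  (forall r, u <= r <= v -> continuity_pt w r) ->
  (forall r, u <= r <= v -> 0 < w r) ->
  (RInt h u v) ^ 2 <= RInt (fun r => / w r) u v * RInt (fun r => w r * h r ^ 2) u v.
Proof.
  intros Huv Hh Hw Hp.
  assert (Cinv : forall r, u <= r <= v -> continuity_pt (fun r => / w r) r).
  { intros. apply cpt_inv; auto. specialize (Hp r H); lra. }
  assert (E1 : ex_RInt h u v) by (apply ex_RInt_cont_on; auto).
  assert (E2 : ex_RInt (fun r => / w r) u v) by (apply ex_RInt_cont_on; auto).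
  assert (E3 : ex_RInt (fun r => w r * h r ^ 2) u v).
  { apply ex_RInt_cont_on; auto. intros. apply cpt_mult; auto. apply cpt_sq; auto. }
  destruct (Req_dec u v) as [Heq|Hne].
  { subst v. rewrite !RInt_Rpoint. lra. }
  rewrite Rmult_comm. apply nonneg_quadratic_discriminant.
  - apply RInt_gt_0; [lra| |].
    + intros. apply Rinv_0_lt_compat. apply Hp; lra.
    + intros. apply continuity_pt_filterlim. apply Cinv; lra.
  - intros l.
    assert (E4 : ex_RInt (fun r => -2 * l * h r) u v) by (apply ex_RInt_Rscal; auto).
    assert (E5 : ex_RInt (fun r => l ^ 2 * / w r) u v) by (apply ex_RInt_Rscal; auto).
    assert (E34 : ex_RInt (fun r => w r * h r ^ 2 + -2 * l * h r) u v)
      by (apply ex_RInt_Rplus; auto).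
    assert (Ex : RInt (fun r => (w r * h r ^ 2 + (-2 * l) * h r) + l ^ 2 * / w r) u v =
       RInt (fun r => w r * h r ^ 2) u v + (-2 * l) * RInt h u v
       + l ^ 2 * RInt (fun r => / w r) u v).
    { rewrite (RInt_Rplus _ _ u v E34 E5), (RInt_Rplus _ _ u v E3 E4).
      rewrite (RInt_Rscal h _ u v E1), (RInt_Rscal (fun r => / w r) _ u v E2). reflexivity. }
    rewrite <- Ex. apply RInt_ge_0; auto.
    + apply ex_RInt_Rplus; auto.
    + intros r Hr. assert (0 < w r) by (apply Hp; lra).
      replace (w r * h r ^ 2 + -2 * l * h r + l ^ 2 * / w r)
        with (w r * (h r - l / w r) ^ 2) by (field; lra).
      apply Rmult_le_pos; [lra|]. apply pow2_ge_0.
Qed.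

Lemma cauchy_schwarz h u v : u <= v -> (forall r, u <= r <= v -> continuity_pt h r) ->
  (RInt h u v) ^ 2 <= (v - u) * RInt (fun r => h r ^ 2) u v.
Proof.
  intros Huv Hh.
  assert (A := cauchy_schwarz_weighted h (fun _ => 1) u v Huv Hh
                 (fun r _ => cpt_const 1 r) (fun _ _ => Rlt_0_1)).
  rewrite (RInt_ext (V:=R_CompleteNormedModule) (fun _ : R => / 1) (fun _ => 1)) in A
    by (intros; apply Rinv_1).
  rewrite (RInt_ext (V:=R_CompleteNormedModule) (fun r : R => 1 * h r ^ 2) (fun r => h r ^ 2)) in A
    by (intros; apply Rmult_1_l).
  rewrite RInt_Rconst in A. lra.
Qed.

Lemma average_sq_le h zl zh : zl < zh -> (forall r, continuity_pt h r) ->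
  (/ (zh - zl) * RInt h zl zh) ^ 2 <= / (zh - zl) * RInt (fun z => h z ^ 2) zl zh.
Proof.
  intros Hz Hh. assert (C := cauchy_schwarz h zl zh ltac:(lra) (fun r _ => Hh r)).
  replace ((/ (zh - zl) * RInt h zl zh) ^ 2) with (/ (zh - zl) ^ 2 * (RInt h zl zh) ^ 2)
    by (field; lra).
  apply Rle_trans with (/ (zh - zl) ^ 2 * ((zh - zl) * RInt (fun r => h r ^ 2) zl zh)).
  - apply Rmult_le_compat_l; auto. left. apply Rinv_0_lt_compat. nra.
  - right. field. lra.
Qed.

Lemma dist_to_average_le g zl zh s E : zl < zh -> (forall r, continuity_pt g r) ->
  (forall z, zl <= z <= zh -> (g s - g z) ^ 2 <= E) ->
  (g s - / (zh - zl) * RInt g zl zh) ^ 2 <= E.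
Proof.
  intros Hz Hg H.
  assert (Cd : forall r, continuity_pt (fun z => g s - g z) r)
    by (intros; apply cpt_minus; [apply cpt_const | auto]).
  replace (g s - / (zh - zl) * RInt g zl zh)
    with (/ (zh - zl) * RInt (fun z => g s - g z) zl zh).
  2:{ assert (Eg : ex_RInt g zl zh) by (apply ex_RInt_cont; auto).
      rewrite (RInt_Rminus (fun _ => g s) g zl zh (ex_RInt_const zl zh (g s)) Eg).
      rewrite RInt_Rconst. field. lra. }
  eapply Rle_trans. apply average_sq_le; auto.
  assert (B : RInt (fun r => (g s - g r) ^ 2) zl zh <= (zh - zl) * E).
  { apply RInt_le_const; try lra; auto. intros. apply cpt_sq; auto. }
  apply (Rmult_le_reg_l (zh - zl)); [lra|].
  rewrite <- Rmult_assoc, Rinv_r, Rmult_1_l by lra. exact B.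
Qed.

Lemma oscillation_bound g g' b s z :
  (forall r, derivable_pt_lim g r (g' r)) -> (forall r, continuity_pt g' r) ->
  -b <= s <= b -> -b <= z <= b ->
  (g s - g z) ^ 2 <= 2 * b * RInt (fun r => g' r ^ 2) (-b) b.
Proof.
  intros Hd Hc Hs Hz.
  assert (K : forall s z, -b <= z <= s -> s <= b ->
                (g s - g z) ^ 2 <= 2 * b * RInt (fun r => g' r ^ 2) (-b) b).
  { intros s0 z0 H1 H2. rewrite <- (FTC_segment g g') by (auto; lra).
    eapply Rle_trans. apply cauchy_schwarz; [lra| intros; auto].
    apply Rmult_le_compat; try lra.
    - apply RInt_nonneg; [lra| intros; apply cpt_sq; auto| intros; apply pow2_ge_0].
    - apply RInt_subinterval; try lra. intros; apply cpt_sq; auto. intros; apply pow2_ge_0. }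
  destruct (Rle_dec z s).
  - apply K; lra.
  - replace ((g s - g z) ^ 2) with ((g z - g s) ^ 2) by ring. apply K; lra.
Qed.

(** * Real powers and the weights [|r|^{(p,p')}] *)

Lemma rp_pos x y : 0 < Rpower x y.
Proof. unfold Rpower. apply exp_pos. Qed.

Lemma rp_one y : Rpower 1 y = 1.
Proof. unfold Rpower. rewrite ln_1, Rmult_0_r. apply exp_0. Qed.

Lemma rp_sq t : 0 < t -> Rpower t 2 = t ^ 2.
Proof. intros. rewrite <- Rpower_pow by auto. replace (INR 2) with 2 by (simpl; lra). reflexivity. Qed.

Lemma exp_le_mono x y : x <= y -> exp x <= exp y.
Proof. intros [H|H]. left; apply exp_increasing; auto. subst; lra. Qed.

Lemma rp_le1 a q : 0 < a <= 1 -> 0 <= q -> Rpower a q <= 1.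
Proof. intros Ha Hq. rewrite <- (rp_one q). apply Rle_Rpower_l; lra. Qed.

Lemma rp_ge1 a q : 1 <= a -> 0 <= q -> 1 <= Rpower a q.
Proof. intros Ha Hq. rewrite <- (rp_one q). apply Rle_Rpower_l; lra. Qed.

Lemma rp_le_base a q : 0 < a <= 1 -> q <= 1 -> a <= Rpower a q.
Proof.
  intros Ha Hq. rewrite <- (Rpower_1 a) at 1 by lra. unfold Rpower. apply exp_le_mono.
  assert (ln a <= 0) by (rewrite <- ln_1; apply ln_le; lra). nra.
Qed.

Lemma rp_ge_base a q : 1 <= a -> q <= 1 -> Rpower a q <= a.
Proof.
  intros Ha Hq. rewrite <- (Rpower_1 a) at 2 by lra. unfold Rpower. apply exp_le_mono.
  assert (0 <= ln a) by (rewrite <- ln_1; apply ln_le; lra). nra.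
Qed.

Lemma bpow_le1 t p p' : 0 < t <= 1 -> bpow t p p' = Rpower t p.
Proof. intros. unfold bpow, pw. destruct Rle_dec; [|lra]. destruct Req_EM_T; [lra|auto]. Qed.
Lemma bpow_gt1 t p p' : 1 < t -> bpow t p p' = Rpower t p'.
Proof. intros. unfold bpow, pw. destruct Rle_dec; [lra|]. destruct Req_EM_T; [lra|auto]. Qed.
Lemma bpow_pos t p p' : 0 < t -> 0 < bpow t p p'.
Proof.
  intros. destruct (Rle_dec t 1).
  - rewrite bpow_le1 by lra. apply rp_pos.
  - rewrite bpow_gt1 by lra. apply rp_pos.
Qed.

(** On (0,oo), [s^{(p,p')} = exp(p min(ln s,0) + p' max(ln s,0))], which is
    continuous. *)
Definition broken_log_exp (p p' s : R) :=
  p * ((ln s - Rabs (ln s)) / 2) + p' * ((ln s + Rabs (ln s)) / 2).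

Lemma bpow_exp s p p' : 0 < s -> bpow s p p' = exp (broken_log_exp p p' s).
Proof.
  intros Hs. unfold bpow, pw, broken_log_exp, Rpower.
  destruct (Rle_dec s 1) as [H1|H1]; destruct (Req_EM_T s 0); try lra.
  - assert (ln s <= 0) by (rewrite <- ln_1; apply ln_le; lra).
    rewrite Rabs_left1 by auto. f_equal. field.
  - assert (0 < ln s) by (rewrite <- ln_1; apply ln_increasing; lra).
    rewrite Rabs_right by lra. f_equal. field.
Qed.

Lemma broken_log_exp_continuous p p' s : 0 < s -> continuity_pt (broken_log_exp p p') s.
Proof.
  intros Hs. unfold broken_log_exp.
  assert (L : continuity_pt ln s)
    by (apply derivable_continuous_pt; exists (/ s); apply derivable_pt_lim_ln; auto).
  assert (A : continuity_pt (fun r => Rabs (ln r)) s)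
    by (apply (continuity_pt_comp ln Rabs s L); apply Rcontinuity_abs).
  apply cpt_plus; apply cpt_scal; apply (cpt_mult _ (fun _ => / 2));
    try apply cpt_const; [apply cpt_minus | apply cpt_plus]; auto.
Qed.

Lemma continuity_pt_local f g x :
  (exists d, 0 < d /\ forall y, Rabs (y - x) < d -> f y = g y) ->
  continuity_pt g x -> continuity_pt f x.
Proof.
  intros [d [Hd H]] Hg. unfold continuity_pt, continue_in, limit1_in, limit_in in *.
  intros eps He. destruct (Hg eps He) as [a [Ha Ha']]. exists (Rmin a d). split.
  apply Rmin_pos; lra. intros y [Hy1 Hy]. simpl in *. unfold R_dist in *.
  assert (Rmin a d <= a) by apply Rmin_l. assert (Rmin a d <= d) by apply Rmin_r.
  rewrite (H y) by lra. rewrite (H x) by (rewrite Rminus_diag, Rabs_R0; lra).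
  apply Ha'. split; auto. lra.
Qed.

Definition wt (p p' r : R) := bpow (Rabs r) p p'.

Lemma wt_pos p p' r : r <> 0 -> 0 < wt p p' r.
Proof. intros. apply bpow_pos. apply Rabs_pos_lt; auto. Qed.

Lemma wt_nonneg p p' r : 0 <= wt p p' r.
Proof.
  destruct (Req_dec r 0).
  - subst. unfold wt, bpow, pw. rewrite Rabs_R0.
    destruct Rle_dec; destruct Req_EM_T; try lra; destruct Req_EM_T; lra.
  - left. apply wt_pos; auto.
Qed.

Lemma wt_even p p' r : wt p p' (- r) = wt p p' r.
Proof. unfold wt. rewrite Rabs_Ropp. auto. Qed.

Lemma wt_continuous_at_zero p p' : 0 <= p -> continuity_pt (wt p p') 0.
Proof.
  intros Hp. destruct (Req_dec p 0) as [E0|E0].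
  - (* p = 0: the weight is 1 near 0 *)
    apply (continuity_pt_local _ (fun _ => 1)); [|apply cpt_const].
    exists 1. split; [lra|]. intros y Hy. rewrite Rminus_0_r in Hy.
    unfold wt, bpow, pw. destruct (Rle_dec (Rabs y) 1); [|lra].
    destruct (Req_EM_T (Rabs y) 0). destruct Req_EM_T; [auto|lra].
    subst p. unfold Rpower. rewrite Rmult_0_l. apply exp_0.
  - (* p > 0: |y|^p < eps as soon as |y| < eps^{1/p} *)
    unfold continuity_pt, continue_in, limit1_in, limit_in. intros eps He.
    exists (Rmin 1 (Rpower eps (/ p))). split; [apply Rmin_pos; [lra | apply rp_pos]|].
    intros y [_ Hy]. simpl in *. unfold R_dist in *. rewrite Rminus_0_r in Hy.
    assert (W0 : wt p p' 0 = 0).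
    { unfold wt, bpow, pw. rewrite Rabs_R0. destruct Rle_dec; [|lra].
      destruct Req_EM_T; [|lra]. destruct Req_EM_T; [lra|auto]. }
    rewrite W0, Rminus_0_r.
    assert (Rmin 1 (Rpower eps (/ p)) <= 1) by apply Rmin_l.
    assert (Rmin 1 (Rpower eps (/ p)) <= Rpower eps (/ p)) by apply Rmin_r.
    unfold wt, bpow, pw. destruct (Rle_dec (Rabs y) 1); [|lra].
    destruct (Req_EM_T (Rabs y) 0) as [Z|Z].
    + destruct Req_EM_T; [lra|]. rewrite Rabs_R0; lra.
    + assert (Hpos := rp_pos (Rabs y) p). rewrite Rabs_right by lra.
      assert (Rpower (Rabs y) p < Rpower (Rpower eps (/ p)) p).
      { apply Rlt_Rpower_l; [lra|]. split; [pose proof (Rabs_pos y)|]; lra. }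
      rewrite Rpower_mult, Rinv_l, Rpower_1 in H1; lra.
Qed.

Lemma wt_cont p p' r : 0 <= p -> continuity_pt (wt p p') r.
Proof.
  intros Hp. destruct (Req_dec r 0) as [E|E].
  - subst r. apply wt_continuous_at_zero; auto.
  - unfold wt. apply (continuity_pt_comp Rabs (fun s => bpow s p p') r).
    + apply Rcontinuity_abs.
    + assert (Hr : 0 < Rabs r) by (apply Rabs_pos_lt; auto).
      apply (continuity_pt_local _ (fun s => exp (broken_log_exp p p' s))).
      * exists (Rabs r). split; auto. intros y Hy. apply bpow_exp.
        assert (Rabs r - y <= Rabs (y - Rabs r)).
        { rewrite <- (Rabs_Ropp (y - Rabs r)). replace (- (y - Rabs r)) with (Rabs r - y) by ring.
          apply Rle_abs. }
        lra.
      * apply (continuity_pt_comp (broken_log_exp p p') exp).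
        -- apply broken_log_exp_continuous; auto.
        -- apply derivable_continuous_pt. exists (exp (broken_log_exp p p' (Rabs r))).
           apply derivable_pt_lim_exp.
Qed.

(** [1 / |r|^{(2δ1,2δ1')} <= r^{-2δ1} + 1] for [r > 0]: the singular part of
    the inverse weight is integrable exactly when [δ1 < 1/2]. *)
Lemma wt_inv_bound d1 d1' r : 0 <= d1' -> 0 < r ->
  / wt (2 * d1) (2 * d1') r <= Rpower r (- (2 * d1)) + 1.
Proof.
  intros Hd Hr. unfold wt. rewrite Rabs_right by lra.
  assert (Hp := rp_pos r (- (2 * d1))).
  destruct (Rle_dec r 1).
  - rewrite bpow_le1, <- Rpower_Ropp by lra. lra.
  - rewrite bpow_gt1 by lra.
    assert (1 <= Rpower r (2 * d1')) by (apply rp_ge1; lra).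
    assert (/ Rpower r (2 * d1') <= 1) by (rewrite <- Rinv_1; apply Rinv_le_contravar; lra).
    lra.
Qed.

Lemma wt_lower p p' a z : 0 <= p -> 0 <= p' -> 0 < a -> a / 2 <= z <= a ->
  Rpower (Rmin (a / 2) (1 / 2)) p <= wt p p' z.
Proof.
  intros Hp Hp' Ha Hz. unfold wt. rewrite Rabs_right by lra.
  assert (Hm : 0 < Rmin (a/2) (1/2)) by (apply Rmin_pos; lra).
  assert (Rmin (a/2) (1/2) <= a/2) by apply Rmin_l.
  assert (Rmin (a/2) (1/2) <= 1/2) by apply Rmin_r.
  destruct (Rle_dec z 1).
  - rewrite bpow_le1 by lra. apply Rle_Rpower_l; auto. lra.
  - rewrite bpow_gt1 by lra. apply Rle_trans with 1.
    + apply rp_le1; lra.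
    + apply rp_ge1; lra.
Qed.

Lemma le_at_left_end (psi : R -> R) s M : 0 < s -> continuity_pt psi 0 ->
  (forall e, 0 < e < s -> psi e <= M) -> psi 0 <= M.
Proof.
  intros Hs Hc H. apply Rnot_lt_le. intros Hlt.
  unfold continuity_pt, continue_in, limit1_in, limit_in in Hc.
  destruct (Hc (psi 0 - M) ltac:(lra)) as [d [Hd Hd']].
  set (e := Rmin (d / 2) (s / 2)).
  assert (He : 0 < e) by (apply Rmin_pos; lra).
  assert (e <= d / 2) by apply Rmin_l. assert (e <= s / 2) by apply Rmin_r.
  assert (A : Rabs (psi e - psi 0) < psi 0 - M).
  { apply (Hd' e). split. split. exact I. lra.
    simpl. unfold R_dist. rewrite Rminus_0_r, Rabs_right; lra. }
  assert (B := H e ltac:(lra)).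
  assert (psi 0 - psi e <= Rabs (psi e - psi 0)).
  { rewrite <- Rabs_Ropp. replace (- (psi e - psi 0)) with (psi 0 - psi e) by ring.
    apply Rle_abs. }
  lra.
Qed.

(** * Weighted one-dimensional oscillation bound in the x_1 direction

    With [W r = |r|^{(2δ1,2δ1')}] and [q = 1 - 2δ1 > 0], Cauchy–Schwarz
    against [W] gives [(g s - g z)^2 <= 4 (a^q/q + a) ∫_{-a}^{a} W g'^2]
    on [[-a, a]], because [1/W] is integrable at 0. *)
Section WeightedOscillation.
Variables d1 d1' : R.
Hypothesis Hd1 : 0 <= d1 < 1/2.
Hypothesis Hd1' : 0 <= d1'.
Let q := 1 - 2 * d1.
Let W := wt (2 * d1) (2 * d1').

Let q_pos : 0 < q.
Proof. unfold q; lra. Qed.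

Let W_cont r : continuity_pt W r.
Proof. apply wt_cont; lra. Qed.

Let cont_rpow c r : 0 < r -> continuity_pt (fun x => Rpower x c) r.
Proof. intros. apply derivable_continuous_pt. eexists. apply derivable_pt_lim_power; auto. Qed.

Lemma RInt_power_singular e s : 0 < e -> e <= s ->
  RInt (fun r => Rpower r (- (2 * d1))) e s = (Rpower s q - Rpower e q) / q.
Proof.
  intros He Hes.
  rewrite (FTC_segment (fun r => / q * Rpower r q)); auto.
  - match goal with |- ?a = ?b => change (@eq R a b) end. field. lra.
  - intros r Hr. replace (Rpower r (- (2 * d1))) with (/ q * (q * Rpower r (q - 1))).
    + apply (derivable_pt_lim_scal (fun x => Rpower x q)). apply derivable_pt_lim_power. lra.
    + replace (q - 1) with (- (2 * d1)) by (unfold q; ring). field. lra.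
  - intros. apply cont_rpow. lra.
Qed.

Lemma RInt_inv_weight_bound e s : 0 < e -> e <= s ->
  RInt (fun r => / W r) e s <= Rpower s q / q + s.
Proof.
  intros He Hes.
  assert (Cinv : forall r, e <= r <= s -> continuity_pt (fun r => / W r) r).
  { intros. apply cpt_inv; auto. apply Rgt_not_eq. apply wt_pos. lra. }
  assert (E1 : ex_RInt (fun r => Rpower r (- (2 * d1))) e s)
    by (apply ex_RInt_cont_on; try lra; intros; apply cont_rpow; lra).
  apply Rle_trans with (RInt (fun r => Rpower r (- (2 * d1)) + 1) e s).
  - apply RInt_le; auto.
    + apply ex_RInt_cont_on; auto.
    + apply ex_RInt_Rplus; auto. apply ex_RInt_const.
    + intros. apply wt_inv_bound; lra.
  - rewrite (RInt_Rplus _ _ e s E1 (ex_RInt_const e s 1)).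
    rewrite RInt_power_singular, RInt_Rconst by lra.
    assert (0 < Rpower e q) by apply rp_pos.
    apply Rplus_le_compat; [|lra]. unfold Rdiv.
    apply Rmult_le_compat_r; [left; apply Rinv_0_lt_compat|]; lra.
Qed.

Lemma weighted_oscillation_right g g' s :
  (forall r, derivable_pt_lim g r (g' r)) -> (forall r, continuity_pt g' r) -> 0 < s ->
  (g s - g 0) ^ 2 <= (Rpower s q / q + s) * RInt (fun r => W r * g' r ^ 2) 0 s.
Proof.
  intros Hd Hc Hs.
  assert (CW2 : forall r, continuity_pt (fun r => W r * g' r ^ 2) r)
    by (intros; apply cpt_mult; [apply W_cont | apply cpt_sq; auto]).
  assert (NW2 : forall r, 0 <= W r * g' r ^ 2)
    by (intros; apply Rmult_le_pos; [apply wt_nonneg | apply pow2_ge_0]).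
  apply (le_at_left_end (fun e => (g s - g e) ^ 2) s); auto.
  { apply cpt_sq. apply cpt_minus. apply cpt_const.
    apply derivable_continuous_pt. exists (g' 0). apply Hd. }
  intros e He. rewrite <- (FTC_segment g g' e s) by (auto; lra).
  eapply Rle_trans.
  { apply (cauchy_schwarz_weighted g' W e s); try lra; auto.
    intros. apply wt_pos. lra. }
  apply Rmult_le_compat.
  - apply RInt_nonneg; try lra.
    + intros. apply cpt_inv; auto. apply Rgt_not_eq, wt_pos. lra.
    + intros. left. apply Rinv_0_lt_compat, wt_pos. lra.
  - apply RInt_nonneg; try lra; auto.
  - apply RInt_inv_weight_bound; lra.
  - apply (RInt_subinterval _ 0 s); try lra; auto.
Qed.

(** The left half follows by the reflection [r |-> -r], under which [W] is
    invariant. *)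
Lemma weighted_oscillation_left g g' s :
  (forall r, derivable_pt_lim g r (g' r)) -> (forall r, continuity_pt g' r) -> s < 0 ->
  (g s - g 0) ^ 2 <= (Rpower (- s) q / q + (- s)) * RInt (fun r => W r * g' r ^ 2) s 0.
Proof.
  intros Hd Hc Hs.
  set (h := fun r => g (- r)). set (h' := fun r => - g' (- r)).
  assert (Hdh : forall r, derivable_pt_lim h r (h' r)).
  { intros r. unfold h, h'. replace (- g' (- r)) with (g' (- r) * (-1)) by ring.
    apply (derivable_pt_lim_comp (fun x => - x) g r (-1) (g' (- r))).
    - apply (derivable_pt_lim_opp id r 1). apply derivable_pt_lim_id.
    - apply Hd. }
  assert (Hch : forall r, continuity_pt h' r).
  { intros r. unfold h'. apply (continuity_pt_opp (fun x => g' (- x))).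
    apply (continuity_pt_comp (fun x => - x) g' r); [|apply Hc].
    apply (continuity_pt_opp (fun x => x)). apply cpt_id. }
  assert (H := weighted_oscillation_right h h' (- s) Hdh Hch ltac:(lra)).
  unfold h in H at 1 2. rewrite Ropp_involutive, Ropp_0 in H.
  set (F := fun r => W r * g' r ^ 2).
  assert (CF : forall r, continuity_pt F r)
    by (intros; unfold F; apply cpt_mult; [apply W_cont | apply cpt_sq; auto]).
  assert (E : RInt (fun r => W r * h' r ^ 2) 0 (- s) = RInt F s 0).
  { assert (C : RInt (fun y => scal (-1) (F (-1 * y + 0))) 0 (- s)
                 = RInt F (-1 * 0 + 0) (-1 * (- s) + 0))
      by (apply (RInt_comp_lin (V:=R_CompleteNormedModule)); apply ex_RInt_cont; auto).
    replace (-1 * 0 + 0) with 0 in C by ring. replace (-1 * (- s) + 0) with s in C by ring.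
    change (RInt (fun y => -1 * F (-1 * y + 0)) 0 (- s) = RInt F 0 s) in C.
    assert (EF : ex_RInt (fun y => F (-1 * y + 0)) 0 (- s)).
    { apply ex_RInt_cont. intros r. apply (continuity_pt_comp (fun y => -1 * y + 0) F r); auto.
      apply cpt_plus. apply cpt_scal. apply cpt_id. apply cpt_const. }
    rewrite (RInt_Rscal _ (-1) _ _ EF) in C.
    rewrite (RInt_Rswap F 0 s) by (apply ex_RInt_cont; auto).
    rewrite <- C.
    match goal with |- ?a = ?b => change (@eq R a b) end.
    rewrite (RInt_ext (V:=R_CompleteNormedModule) (fun r => W r * h' r ^ 2)
                      (fun y => F (-1 * y + 0))).
    { rewrite Ropp_mult_distr_l. replace (- -1) with 1 by ring. rewrite Rmult_1_l. reflexivity. }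
    intros x _. unfold F, h'. replace (-1 * x + 0) with (- x) by ring. unfold W.
    rewrite wt_even. match goal with |- ?a = ?b => change (@eq R a b) end. ring. }
  rewrite E in H. exact H.
Qed.

Lemma weighted_oscillation g g' a s z :
  (forall r, derivable_pt_lim g r (g' r)) -> (forall r, continuity_pt g' r) -> 0 < a ->
  -a <= s <= a -> -a <= z <= a ->
  (g s - g z) ^ 2 <= 4 * (Rpower a q / q + a) * RInt (fun r => W r * g' r ^ 2) (-a) a.
Proof.
  intros Hd Hc Ha Hs Hz.
  set (I := RInt (fun r => W r * g' r ^ 2) (-a) a).
  assert (CF : forall r, continuity_pt (fun r => W r * g' r ^ 2) r)
    by (intros; apply cpt_mult; [apply W_cont | apply cpt_sq; auto]).
  assert (NF : forall r, 0 <= W r * g' r ^ 2)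
    by (intros; apply Rmult_le_pos; [apply wt_nonneg | apply pow2_ge_0]).
  assert (Cq : forall u, 0 < u <= a -> 0 <= Rpower u q / q + u <= Rpower a q / q + a).
  { intros u Hu. assert (0 < Rpower u q) by apply rp_pos.
    assert (Rpower u q <= Rpower a q) by (apply Rle_Rpower_l; lra).
    assert (0 < / q) by (apply Rinv_0_lt_compat; lra). unfold Rdiv. nra. }
  assert (Hfrom0 : forall t, -a <= t <= a -> (g t - g 0) ^ 2 <= (Rpower a q / q + a) * I).
  { intros t Ht. destruct (Rtotal_order t 0) as [Hn|[H0|Hp]].
    - eapply Rle_trans. apply weighted_oscillation_left; auto.
      apply Rmult_le_compat; try apply Cq; try lra.
      + apply RInt_nonneg; auto; lra.
      + apply RInt_subinterval; auto; lra.
    - subst. rewrite Rminus_diag. simpl. rewrite Rmult_0_l.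
      apply Rmult_le_pos; [apply Cq; lra | apply RInt_nonneg; auto; lra].
    - eapply Rle_trans. apply weighted_oscillation_right; auto.
      apply Rmult_le_compat; try apply Cq; try lra.
      + apply RInt_nonneg; auto; lra.
      + apply RInt_subinterval; auto; lra. }
  assert (A := Hfrom0 s Hs). assert (B := Hfrom0 z Hz).
  assert ((g s - g z) ^ 2 <= 2 * (g s - g 0) ^ 2 + 2 * (g z - g 0) ^ 2).
  { assert (0 <= (g s + g z - 2 * g 0) ^ 2) by apply pow2_ge_0. nra. }
  lra.
Qed.

End WeightedOscillation.

Lemma sq_sum_le u v : (u + v) ^ 2 <= 2 * u ^ 2 + 2 * v ^ 2.
Proof. assert (0 <= (u - v) ^ 2) by apply pow2_ge_0. nra. Qed.

(** * The tensorization step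

    Integrate over coordinates [j, ..., j+n] with coordinate [j] outermost.
    Let [M z] be the mean of [phi] over the inner box on the slice
    [x_j = z], and [K0] the average of [M] over a window [[zl, zh]].  Writing
    [phi - K0 = (phi - c) + (c - K0)] with [c] the average of [phi] over
    [x_j in [zl, zh]], the first part is controlled by a one-dimensional
    oscillation bound [E] in the variable [x_j], the second by the variances
    [R0 z] of the slices inside the window. *)
Section Tensorization.
Variable m : nat.
Variables lo hi : nat -> R.
Hypothesis Hlh : forall i, lo i <= hi i.
Variable phi : (nat -> R) -> R.
Hypothesis Cphi : Cont m phi.
Variables j n : nat.
Hypothesis Hjn : (j + S n <= S m)%nat.
Variables zl zh : R.
Hypothesis Hwin : lo j <= zl /\ zl < zh /\ zh <= hi j.

Let Hj : (j <= m)%nat. Proof. lia. Qed.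
Let HL : 0 < zh - zl. Proof. lra. Qed.

Definition window_avg (y : nat -> R) := / (zh - zl) * Rint (fun z => phi (upd y j z)) zl zh.

Let Cavg : Cont m window_avg.
Proof. apply Cont_scal. apply Cont_param; auto. Qed.

Lemma tensor_oscillation_term (E : (nat -> R) -> R) x : Cont m E ->
  (forall y s z, lo j <= s <= hi j -> zl <= z <= zh ->
     (phi (upd y j s) - phi (upd y j z)) ^ 2 <= E y) ->
  IB lo hi j (S n) (fun y => (phi y - window_avg y) ^ 2) x
  <= (hi j - lo j) * IB lo hi (S j) n E x.
Proof.
  intros CE Hosc.
  assert (CG : Cont m (fun y => (phi y - window_avg y) ^ 2))
    by (apply Cont_sq; apply Cont_minus; auto).
  rewrite IB_peel, (IB_fubini m lo hi); auto.
  rewrite <- (IB_scal m lo hi); auto; try lia.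
  apply (IB_mono m lo hi Hlh); auto; try lia.
  - apply (Cont_param m (fun y => (phi y - window_avg y) ^ 2)); auto.
  - apply Cont_scal; auto.
  - intros y. rewrite (Cont_Rint m (fun y => (phi y - window_avg y) ^ 2)) by auto.
    apply RInt_le_const; [apply Hlh | intros; apply (Cont_slice m (fun y => (phi y - window_avg y) ^ 2)); auto |].
    intros s Hs. unfold window_avg.
    replace (Rint (fun z => phi (upd (upd y j s) j z)) zl zh)
      with (RInt (fun z => phi (upd y j z)) zl zh).
    + apply (dist_to_average_le (fun z => phi (upd y j z))); try lra.
      * intros. apply (Cont_slice m); auto.
      * intros. apply Hosc; auto.
    + rewrite (Cont_Rint m) by auto. apply RInt_ext. intros. rewrite upd_upd. reflexivity.
Qed.

Variable V : R.
Variable x : nat -> R.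

Definition slice_mean (z : R) := IB lo hi (S j) n phi (upd x j z) / V.
Definition window_mean := / (zh - zl) * RInt slice_mean zl zh.

Let CIB : Cont m (IB lo hi (S j) n phi).
Proof. apply IB_Cont; auto. lia. Qed.

Let Cmean r : continuity_pt slice_mean r.
Proof.
  unfold slice_mean. apply (cpt_mult (fun z => IB lo hi (S j) n phi (upd x j z)) (fun _ => / V)).
  apply (Cont_slice m); auto. apply cpt_const.
Qed.

Definition window_dev (y : nat -> R) := (window_avg y - window_mean) ^ 2.
Definition slice_dev (y : nat -> R) := (phi y - slice_mean (y j)) ^ 2.

Let Cwdev : Cont m window_dev.
Proof. apply Cont_sq; apply Cont_minus; auto; apply Cont_const. Qed.

Let Csdev : Cont m slice_dev.
Proof.
  apply Cont_sq. apply Cont_minus; auto.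
  apply (Cont_comp m slice_mean (fun y => y j)); auto. apply Cont_coord; auto.
Qed.

(** Jensen: [window_avg y - window_mean] is the window average of
    [phi - slice_mean] along the [x_j]-line through [y]. *)
Lemma window_dev_jensen y :
  window_dev y <= / (zh - zl) * Rint (fun z => slice_dev (upd y j z)) zl zh.
Proof.
  unfold window_dev, window_avg, window_mean.
  rewrite (Cont_Rint m phi), (Cont_Rint m slice_dev) by auto.
  assert (Ephi : ex_RInt (fun z => phi (upd y j z)) zl zh) by (apply (Cont_ex_RInt m); auto).
  assert (Emean : ex_RInt slice_mean zl zh) by (apply ex_RInt_cont; exact Cmean).
  rewrite <- Rmult_minus_distr_l, <- (RInt_Rminus _ _ _ _ Ephi Emean).
  eapply Rle_trans.
  - apply average_sq_le; [lra|]. intros r. apply cpt_minus; [|apply Cmean].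
    apply (Cont_slice m); auto.
  - right. f_equal. apply RInt_ext. intros z _. unfold slice_dev. rewrite upd_eq. reflexivity.
Qed.

Lemma window_dev_slices (R0 : R -> R) : (forall r, continuity_pt R0 r) ->
  (forall z, zl <= z <= zh ->
     IB lo hi (S j) n (fun y => (phi y - slice_mean z) ^ 2) (upd x j z) <= R0 z) ->
  IB lo hi (S j) n window_dev x <= / (zh - zl) * RInt R0 zl zh.
Proof.
  intros CR HR. eapply Rle_trans.
  { apply (IB_mono m lo hi Hlh (S j) n window_dev
             (fun y => / (zh - zl) * Rint (fun z => slice_dev (upd y j z)) zl zh) x); auto; try lia.
    - apply Cont_scal. apply (Cont_param m slice_dev); auto.
    - apply window_dev_jensen. }
  rewrite (IB_scal m lo hi); try lia. 2: apply (Cont_param m slice_dev); auto.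
  apply Rmult_le_compat_l; [left; apply Rinv_0_lt_compat; auto|].
  rewrite <- (IB_fubini m lo hi); auto.
  assert (CIB3 : Cont m (IB lo hi (S j) n slice_dev)) by (apply IB_Cont; auto; lia).
  rewrite Rint_RInt by (apply (Cont_ex_RInt m); auto).
  apply RInt_le; try lra.
  - apply (Cont_ex_RInt m); auto.
  - apply ex_RInt_cont; auto.
  - intros z Hz. rewrite (IB_ext lo hi (S j) n slice_dev (fun y => (phi y - slice_mean z) ^ 2)).
    + apply HR; lra.
    + intros y Hy. unfold slice_dev. rewrite (Hy j) by lia. rewrite upd_eq. reflexivity.
Qed.

(** [window_dev] does not depend on [x_j], so its box integral is the
    length of [[lo j, hi j]] times its integral over the inner box. *)
Lemma tensor_window_term (R0 : R -> R) : (forall r, continuity_pt R0 r) ->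
  (forall z, zl <= z <= zh ->
     IB lo hi (S j) n (fun y => (phi y - slice_mean z) ^ 2) (upd x j z) <= R0 z) ->
  IB lo hi j (S n) window_dev x <= (hi j - lo j) / (zh - zl) * RInt R0 zl zh.
Proof.
  intros CR HR.
  assert (Inv : forall s, IB lo hi (S j) n window_dev (upd x j s) = IB lo hi (S j) n window_dev x).
  { intros s. rewrite <- IB_upd. apply IB_ext. intros y _. unfold window_dev, window_avg.
    do 4 f_equal. extensionality z. rewrite upd_upd. reflexivity. }
  rewrite IB_peel.
  replace (fun s => IB lo hi (S j) n window_dev (upd x j s))
    with (fun _ : R => IB lo hi (S j) n window_dev x)
    by (extensionality s; symmetry; apply Inv).
  rewrite Rint_RInt by apply ex_RInt_const. rewrite RInt_Rconst.
  assert (0 <= hi j - lo j) by (specialize (Hlh j); lra).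
  apply Rle_trans with ((hi j - lo j) * (/ (zh - zl) * RInt R0 zl zh)).
  - apply Rmult_le_compat_l; auto. apply window_dev_slices; auto.
  - right. unfold Rdiv. ring.
Qed.

Lemma tensorization (E : (nat -> R) -> R) (R0 : R -> R) :
  Cont m E -> (forall r, continuity_pt R0 r) ->
  (forall y s z, lo j <= s <= hi j -> zl <= z <= zh ->
     (phi (upd y j s) - phi (upd y j z)) ^ 2 <= E y) ->
  (forall z, zl <= z <= zh ->
     IB lo hi (S j) n (fun y => (phi y - slice_mean z) ^ 2) (upd x j z) <= R0 z) ->
  IB lo hi j (S n) (fun y => (phi y - window_mean) ^ 2) x
  <= 2 * (hi j - lo j) * IB lo hi (S j) n E x
     + 2 * (hi j - lo j) / (zh - zl) * RInt R0 zl zh.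
Proof.
  intros CE CR Hosc HR.
  set (G1 := fun y => (phi y - window_avg y) ^ 2).
  assert (CG1 : Cont m G1) by (apply Cont_sq; apply Cont_minus; auto).
  eapply Rle_trans.
  { apply (IB_mono m lo hi Hlh j (S n) _ (fun y => 2 * G1 y + 2 * window_dev y)); auto.
    - apply Cont_sq. apply Cont_minus; auto. apply Cont_const.
    - apply Cont_plus; apply Cont_scal; auto.
    - intros y. unfold G1, window_dev.
      replace (phi y - window_mean) with ((phi y - window_avg y) + (window_avg y - window_mean))
        by ring.
      apply sq_sum_le. }
  rewrite (IB_plus m lo hi), !(IB_scal m lo hi); auto; try (apply Cont_scal; auto).
  assert (T1 := tensor_oscillation_term E x CE Hosc).
  assert (T2 := tensor_window_term R0 CR HR).
  fold G1 in T1. unfold Rdiv in *. lra.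
Qed.

End Tensorization.

Definition box_lo (a b : R) := fun i : nat => if Nat.eq_dec i 0 then - a else - b.
Definition box_hi (a b : R) := fun i : nat => if Nat.eq_dec i 0 then a else b.

Lemma box_lo_hi a b : 0 < a -> 0 < b -> forall i, box_lo a b i <= box_hi a b i.
Proof. intros. unfold box_lo, box_hi. destruct Nat.eq_dec; lra. Qed.

Lemma box_x2 a b j : (1 <= j)%nat -> box_lo a b j = - b /\ box_hi a b j = b.
Proof. intros. unfold box_lo, box_hi. destruct (Nat.eq_dec j 0); [lia|auto]. Qed.

Lemma box_volume a b n : PL (box_lo a b) (box_hi a b) 0 (S n) = 2 * a * (2 * b) ^ n.
Proof.
  induction n.
  - simpl. unfold box_lo, box_hi. simpl. ring.
  - change (PL (box_lo a b) (box_hi a b) 0 (S (S n)))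
      with (PL (box_lo a b) (box_hi a b) 0 (S n) * (box_hi a b (S n) - box_lo a b (S n))).
    rewrite IHn. destruct (box_x2 a b (S n)) as [-> ->]; [lia|]. simpl. ring.
Qed.

(** * A C^1 function and its partial derivatives *)
Section C1Function.
Variable m : nat.
Variable phi : (nat -> R) -> R.
Variable D : nat -> (nat -> R) -> R.
Hypothesis HC : C1c m phi D.

Lemma phi_Cont : Cont m phi.
Proof. destruct HC as [_ [_ [H _]]]. exact H. Qed.

Lemma D_Cont i : (i <= m)%nat -> Cont m (D i).
Proof. destruct HC as [_ [_ [_ [H _]]]]. intros Hi x eps He. apply H; auto. Qed.

Lemma phi_der i y : (i <= m)%nat ->
  forall r, derivable_pt_lim (fun s => phi (upd y i s)) r (D i (upd y i r)).
Proof.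
  destruct HC as [_ [H _]]. intros Hi r. specialize (H i (upd y i r) Hi).
  rewrite upd_eq in H. replace (fun s => phi (upd y i s)) with (fun s => phi (upd (upd y i r) i s)).
  exact H. extensionality s. rewrite upd_upd. reflexivity.
Qed.

Lemma D_slice_cont i y : (i <= m)%nat -> forall r, continuity_pt (fun s => D i (upd y i s)) r.
Proof. intros Hi r. apply (Cont_slice m); auto. apply D_Cont; auto. Qed.

Fixpoint tail_energy (n : nat) (y : nat -> R) : R :=
  match n with O => 0 | S n' => D (m - n')%nat y ^ 2 + tail_energy n' y end.

Lemma tail_energy_Cont n : (n <= S m)%nat -> Cont m (tail_energy n).
Proof.
  induction n; intros Hn; simpl. apply Cont_const.
  apply Cont_plus. apply Cont_sq. apply D_Cont. lia. apply IHn. lia.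
Qed.

Lemma tail_energy_nonneg n y : 0 <= tail_energy n y.
Proof. induction n; simpl. lra. assert (0 <= D (m - n)%nat y ^ 2) by apply pow2_ge_0. lra. Qed.

Lemma tail_energy_sum1 y : tail_energy m y = sum1 m (fun i => D i y ^ 2).
Proof.
  assert (G : forall n, (n <= m)%nat ->
    tail_energy n y + sum1 (m - n) (fun i => D i y ^ 2) = sum1 m (fun i => D i y ^ 2)).
  { induction n; intros Hn.
    - simpl. rewrite Nat.sub_0_r. ring.
    - rewrite <- IHn by lia. simpl. replace (m - n)%nat with (S (m - S n)) by lia. simpl.
      replace (S (m - S n)) with (m - n)%nat by lia. ring. }
  rewrite <- (G m) by lia. rewrite Nat.sub_diag. simpl. ring.
Qed.

(** * Poincaré inequality in the x_2 variables *)
Fixpoint poincare_const (n : nat) : R :=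
  match n with O => 1 | S n' => 8 + 2 * poincare_const n' end.

Lemma poincare_const_pos n : 0 < poincare_const n.
Proof. induction n; simpl; lra. Qed.

Definition x2_poincare (n : nat) : Prop := forall a b x, 0 < a -> 0 < b ->
  IB (box_lo a b) (box_hi a b) (S m - n) n
     (fun y => (phi y - IB (box_lo a b) (box_hi a b) (S m - n) n phi x / (2 * b) ^ n) ^ 2) x
  <= poincare_const n * b ^ 2 * IB (box_lo a b) (box_hi a b) (S m - n) n (tail_energy n) x.

Section X2Step.
Variables a b : R.
Hypotheses (Ha : 0 < a) (Hb : 0 < b).
Let lo := box_lo a b.
Let hi := box_hi a b.
Let Hlh : forall i, lo i <= hi i. Proof. apply box_lo_hi; auto. Qed.
Variables j n : nat.
Hypotheses (Hj1 : (1 <= j)%nat) (Hjn_eq : (j + S n = S m)%nat).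
Let Hjn : (j + S n <= S m)%nat. Proof. lia. Qed.
Let Hjm : (j <= m)%nat. Proof. lia. Qed.
Let El : lo j = - b. Proof. apply box_x2; auto. Qed.
Let Eh : hi j = b. Proof. apply box_x2; auto. Qed.

Lemma window_mean_full x :
  window_mean lo hi phi j n (- b) b ((2 * b) ^ n) x
  = IB lo hi j (S n) phi x / (2 * b) ^ S n.
Proof.
  unfold window_mean, slice_mean. rewrite IB_peel, El, Eh.
  assert (CI : Cont m (IB lo hi (S j) n phi)) by (apply IB_Cont; [lia | apply phi_Cont]).
  rewrite Rint_RInt by (apply (Cont_ex_RInt m); auto).
  rewrite (RInt_ext (V:=R_CompleteNormedModule) _
             (fun z => / (2 * b) ^ n * IB lo hi (S j) n phi (upd x j z)))
    by (intros; unfold Rdiv; apply Rmult_comm).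
  rewrite RInt_Rscal by (apply (Cont_ex_RInt m); auto).
  simpl. match goal with |- ?u = ?v => change (@eq R u v) end.
  field. split; [|lra]. apply pow_nonzero. lra.
Qed.

Lemma oscillation_energy x :
  IB lo hi (S j) n (fun y => 2 * b * Rint (fun r => D j (upd y j r) ^ 2) (- b) b) x
  = 2 * b * IB lo hi j (S n) (fun y => D j y ^ 2) x.
Proof.
  assert (CDj : Cont m (fun y => D j y ^ 2)) by (apply Cont_sq; apply D_Cont; auto).
  rewrite (IB_scal m lo hi); [| lia | apply (Cont_param m (fun y => D j y ^ 2)); auto].
  rewrite <- (IB_fubini_peel m lo hi j n (fun y => D j y ^ 2)), El, Eh; auto.
Qed.

Lemma slice_tail_energy x c :
  RInt (fun z => c * IB lo hi (S j) n (tail_energy n) (upd x j z)) (- b) b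
  = c * IB lo hi j (S n) (tail_energy n) x.
Proof.
  assert (CT : Cont m (tail_energy n)) by (apply tail_energy_Cont; lia).
  assert (CIT : Cont m (IB lo hi (S j) n (tail_energy n))) by (apply IB_Cont; auto; lia).
  rewrite RInt_Rscal by (apply (Cont_ex_RInt m); auto). f_equal.
  rewrite IB_peel, El, Eh, Rint_RInt; auto. apply (Cont_ex_RInt m); auto.
Qed.

Lemma tail_energy_step x :
  IB lo hi j (S n) (tail_energy (S n)) x
  = IB lo hi j (S n) (fun y => D j y ^ 2) x + IB lo hi j (S n) (tail_energy n) x.
Proof.
  simpl tail_energy. replace (m - n)%nat with j by lia.
  apply (IB_plus m lo hi); auto.
  - apply Cont_sq; apply D_Cont; auto.
  - apply tail_energy_Cont; lia.
Qed.

Lemma x2_poincare_step : x2_poincare n -> forall x,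
  IB lo hi j (S n) (fun y => (phi y - IB lo hi j (S n) phi x / (2 * b) ^ S n) ^ 2) x
  <= poincare_const (S n) * b ^ 2 * IB lo hi j (S n) (tail_energy (S n)) x.
Proof.
  intros IH x. set (K := poincare_const n).
  assert (Cphi := phi_Cont).
  assert (CDj : Cont m (fun y => D j y ^ 2)) by (apply Cont_sq; apply D_Cont; auto).
  assert (CT : Cont m (tail_energy n)) by (apply tail_energy_Cont; lia).
  assert (CIT : Cont m (IB lo hi (S j) n (tail_energy n))) by (apply IB_Cont; auto; lia).
  set (E := fun y => 2 * b * Rint (fun r => D j (upd y j r) ^ 2) (- b) b).
  set (R0 := fun z => K * b ^ 2 * IB lo hi (S j) n (tail_energy n) (upd x j z)).
  assert (ST := tensorization m lo hi Hlh phi Cphi j n Hjn (- b) b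
                  ltac:(rewrite El, Eh; lra) ((2 * b) ^ n) x E R0).
  rewrite window_mean_full in ST. rewrite El, Eh in ST.
  eapply Rle_trans; [apply ST|].
  - apply Cont_scal. apply (Cont_param m (fun y => D j y ^ 2)); auto.
  - intros r. apply cpt_scal. apply (Cont_slice m); auto.
  - intros y s z Hs Hz. unfold E. rewrite (Cont_Rint m (fun y => D j y ^ 2)) by auto.
    apply (oscillation_bound (fun r => phi (upd y j r)) (fun r => D j (upd y j r))).
    + apply phi_der; auto.
    + apply D_slice_cont; auto.
    + exact Hs.
    + exact Hz.
  - intros z Hz. unfold slice_mean, R0.
    assert (ESj : (S m - n)%nat = S j) by lia.
    specialize (IH a b (upd x j z) Ha Hb). rewrite ESj in IH. exact IH.
  - unfold E, R0. rewrite oscillation_energy, slice_tail_energy, tail_energy_step.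
    assert (A0 : 0 <= IB lo hi j (S n) (fun y => D j y ^ 2) x)
      by (apply (IB_nonneg m lo hi Hlh); auto; intros; apply pow2_ge_0).
    assert (B0 : 0 <= IB lo hi j (S n) (tail_energy n) x)
      by (apply (IB_nonneg m lo hi Hlh); auto; intros; apply tail_energy_nonneg).
    assert (HK : 0 < K) by apply poincare_const_pos.
    assert (Hb2 : 0 < b ^ 2) by (apply pow_lt; lra).
    simpl poincare_const. fold K.
    replace (2 * (b - - b) / (b - - b)) with 2 by (field; lra).
    assert (0 <= 2 * K * b ^ 2 * IB lo hi j (S n) (fun y => D j y ^ 2) x)
      by (repeat apply Rmult_le_pos; lra).
    assert (0 <= 8 * b ^ 2 * IB lo hi j (S n) (tail_energy n) x)
      by (repeat apply Rmult_le_pos; lra).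
    nra.
Qed.

End X2Step.

Lemma x2_poincare_all n : (n <= m)%nat -> x2_poincare n.
Proof.
  induction n; intros Hn a b x Ha Hb.
  - simpl. replace (phi x - phi x / 1) with 0 by field. lra.
  - replace (S m - S n)%nat with (m - n)%nat by lia.
    apply x2_poincare_step; auto; try lia.
    apply IHn. lia.
Qed.

End C1Function.

(** * The weighted variance bound on a box

    This is the
    tensorization step in [x_1] with the window [[a/2, a]], on which the
    x_2-weight is bounded below. *)
Section WeightedBox.
Variable m : nat.
Variable phi : (nat -> R) -> R.
Variable D : nat -> (nat -> R) -> R.
Hypothesis HC : C1c m phi D.
Variables d1 d1' d2 d2' : R.
Hypothesis Hd1 : 0 <= d1 < 1/2.
Hypothesis Hd1' : 0 <= d1'.
Hypothesis Hd2 : 0 <= d2.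
Hypothesis Hd2' : 0 <= d2'.
Variables a b : R.
Hypotheses (Ha : 0 < a) (Hb : 0 < b).

Let q := 1 - 2 * d1.
Let lo := box_lo a b.
Let hi := box_hi a b.
Let Hlh : forall i, lo i <= hi i. Proof. apply box_lo_hi; auto. Qed.
Let El : lo 0%nat = - a. Proof. reflexivity. Qed.
Let Eh : hi 0%nat = a. Proof. reflexivity. Qed.

Definition x1_energy (y : nat -> R) := wt (2 * d1) (2 * d1') (y 0%nat) * D 0%nat y ^ 2.
Definition x2_energy (y : nat -> R) := wt (2 * d2) (2 * d2') (y 0%nat) * tail_energy m D m y.

Lemma weight_Cont p p' : 0 <= p -> Cont m (fun y => wt p p' (y 0%nat)).
Proof. intros. apply (Cont_comp m (wt p p') (fun y => y 0%nat)). apply Cont_coord; lia. intros; apply wt_cont; auto. Qed.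

Lemma x1_energy_Cont : Cont m x1_energy.
Proof.
  apply Cont_mult; [apply weight_Cont; lra|]. apply Cont_sq. apply (D_Cont m phi); auto. lia.
Qed.

Lemma x2_energy_Cont : Cont m x2_energy.
Proof. apply Cont_mult; [apply weight_Cont; lra|]. apply (tail_energy_Cont m phi); auto. Qed.

Lemma x1_energy_nonneg y : 0 <= x1_energy y.
Proof. apply Rmult_le_pos; [apply wt_nonneg | apply pow2_ge_0]. Qed.

Lemma x2_energy_nonneg y : 0 <= x2_energy y.
Proof. apply Rmult_le_pos; [apply wt_nonneg | apply tail_energy_nonneg]. Qed.

Let Wa := Rpower a q / q + a.
Let wmin := Rpower (Rmin (a / 2) (1 / 2)) (2 * d2).

Lemma x1_oscillation_energy x :
  IB lo hi 1 m (fun y => 4 * Wa * Rint (fun r => x1_energy (upd y 0%nat r)) (- a) a) x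
  = 4 * Wa * IB lo hi 0 (S m) x1_energy x.
Proof.
  assert (C1 := x1_energy_Cont).
  rewrite (IB_scal m lo hi) by (try apply (Cont_param m x1_energy); auto; lia).
  rewrite <- (IB_fubini_peel m lo hi 0 m x1_energy) by (auto; lia). reflexivity.
Qed.

(** On the window the x_2-weight is at least [wmin], so the averaged x_2
    Poincaré bounds are controlled by the weighted x_2-energy. *)
Lemma x2_window_energy x :
  RInt (fun z => poincare_const m * b ^ 2 * IB lo hi 1 m (tail_energy m D m) (upd x 0%nat z)) (a / 2) a
  <= poincare_const m * b ^ 2 / wmin * IB lo hi 0 (S m) x2_energy x.
Proof.
  assert (Hwmin : 0 < wmin) by apply rp_pos.
  assert (CT : Cont m (tail_energy m D m)) by (apply (tail_energy_Cont m phi); auto).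
  assert (CIT : Cont m (IB lo hi 1 m (tail_energy m D m))) by (apply IB_Cont; auto).
  assert (CI2 : Cont m (IB lo hi 1 m x2_energy)) by (apply IB_Cont; auto; apply x2_energy_Cont).
  rewrite RInt_Rscal by (apply (Cont_ex_RInt m); auto; lia).
  replace (poincare_const m * b ^ 2 / wmin * IB lo hi 0 (S m) x2_energy x)
    with (poincare_const m * b ^ 2 * (/ wmin * IB lo hi 0 (S m) x2_energy x))
    by (unfold Rdiv; ring).
  apply Rmult_le_compat_l; [apply Rmult_le_pos; [left; apply poincare_const_pos | apply pow2_ge_0]|].
  apply Rle_trans with (RInt (fun z => / wmin * IB lo hi 1 m x2_energy (upd x 0%nat z)) (a / 2) a).
  - apply RInt_le; try lra.
    + apply (Cont_ex_RInt m); auto; lia.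
    + apply ex_RInt_Rscal. apply (Cont_ex_RInt m); auto; lia.
    + intros z Hz.
      rewrite (IB_ext lo hi 1 m x2_energy (fun y => wt (2 * d2) (2 * d2') z * tail_energy m D m y)).
      2:{ intros y Hy. unfold x2_energy. rewrite (Hy 0%nat), upd_eq by lia. reflexivity. }
      rewrite (IB_scal m lo hi) by (auto; lia).
      assert (WL : wmin <= wt (2 * d2) (2 * d2') z) by (apply wt_lower; lra).
      assert (N : 0 <= IB lo hi 1 m (tail_energy m D m) (upd x 0%nat z)).
      { apply (IB_nonneg m lo hi Hlh); auto. intros; apply tail_energy_nonneg. }
      rewrite <- Rmult_assoc. rewrite <- (Rmult_1_l (IB _ _ _ _ _ (upd x 0%nat z))) at 1.
      apply Rmult_le_compat_r; auto.
      apply (Rmult_le_reg_l wmin); auto. rewrite <- Rmult_assoc, Rinv_r; lra.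
  - rewrite RInt_Rscal by (apply (Cont_ex_RInt m); auto; lia).
    apply Rmult_le_compat_l; [left; apply Rinv_0_lt_compat; auto|].
    rewrite IB_peel, El, Eh, Rint_RInt by (apply (Cont_ex_RInt m); auto; lia).
    apply RInt_subinterval; try lra.
    + intros. apply (Cont_slice m); auto. lia.
    + intros. apply (IB_nonneg m lo hi Hlh); auto. apply x2_energy_Cont. apply x2_energy_nonneg.
Qed.

Lemma weighted_box_variance x :
  IB lo hi 0 (S m) (fun y => (phi y - IB lo hi 0 (S m) phi x / (2 * a * (2 * b) ^ m)) ^ 2) x
  <= 16 * a * Wa * IB lo hi 0 (S m) x1_energy x
   + 8 * poincare_const m * b ^ 2 / wmin * IB lo hi 0 (S m) x2_energy x.
Proof.
  assert (Cphi := phi_Cont m phi D HC).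
  assert (Hq : 0 < q) by (unfold q; lra).
  set (E := fun y => 4 * Wa * Rint (fun r => x1_energy (upd y 0%nat r)) (- a) a).
  set (R0 := fun z => poincare_const m * b ^ 2 * IB lo hi 1 m (tail_energy m D m) (upd x 0%nat z)).
  assert (CT : Cont m (tail_energy m D m)) by (apply (tail_energy_Cont m phi); auto).
  assert (CIT : Cont m (IB lo hi 1 m (tail_energy m D m))) by (apply IB_Cont; auto).
  assert (ST := tensorization m lo hi Hlh phi Cphi 0 m ltac:(lia) (a / 2) a
                  ltac:(rewrite El, Eh; lra) ((2 * b) ^ m) x E R0).
  (* the box mean does at least as well as the window mean *)
  eapply Rle_trans.
  { rewrite <- box_volume. apply (IB_mean_minimizes m); auto.
    rewrite box_volume. apply Rmult_lt_0_compat; [lra | apply pow_lt; lra]. }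
  eapply Rle_trans; [apply ST|].
  - apply Cont_scal. apply (Cont_param m x1_energy); [apply x1_energy_Cont | lia].
  - intros r. apply cpt_scal. apply (Cont_slice m); auto. lia.
  - intros y s z Hs Hz. rewrite El, Eh in Hs. unfold E.
    rewrite (Cont_Rint m x1_energy) by (apply x1_energy_Cont || lia).
    rewrite (RInt_ext (V:=R_CompleteNormedModule) _
               (fun r => wt (2 * d1) (2 * d1') r * D 0%nat (upd y 0%nat r) ^ 2))
      by (intros; unfold x1_energy; rewrite upd_eq; reflexivity).
    apply (weighted_oscillation d1 d1' Hd1 Hd1' (fun r => phi (upd y 0%nat r))
             (fun r => D 0%nat (upd y 0%nat r))); auto; try lra.
    + apply (phi_der m phi D HC); lia.
    + apply (D_slice_cont m phi D HC); lia.
  - intros z Hz. unfold slice_mean, R0.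
    assert (P := x2_poincare_all m phi D HC m (le_n m) a b (upd x 0%nat z) Ha Hb).
    replace (S m - m)%nat with 1%nat in P by lia. exact P.
  - rewrite El, Eh. unfold E. rewrite x1_oscillation_energy.
    assert (IR := x2_window_energy x). fold R0 in IR.
    assert (N2 : 0 <= IB lo hi 0 (S m) x2_energy x)
      by (apply (IB_nonneg m lo hi Hlh); [lia | apply x2_energy_Cont | apply x2_energy_nonneg]).
    replace (2 * (a - - a) / (a - a / 2)) with 8 by (field; lra).
    unfold Rdiv in *. nra.
Qed.

End WeightedBox.

(** * Scaling of the constants with [t]

    With [a = t^{(α,α')}] and [b = t^{(β,β')}], both constants of the
    weighted box inequality are [O(t^2)] on [(0, T]]: for [t <= 1] the
    exponents are tuned so that [a^{1+q} = t^2] and [b^2 = t^2 a^{2δ2}];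
    for [1 < t <= T] everything is bounded while [t^2 >= 1]. *)
Section Scaling.
Variables d1 d1' d2 d2' T : R.
Hypothesis Hd1 : 0 <= d1 < 1/2.
Hypothesis Hd1' : 1/2 <= d1' < 1.
Hypothesis Hd2' : 0 <= d2'.

Let q := 1 - 2 * d1.
Let Hq : 0 < q <= 1. Proof. unfold q; lra. Qed.

Definition x1_const := 16 * (/ q + 1) * (1 + Rpower T (alpha d1') ^ 2).
Definition x2_const := (1 + Rpower T (betaexp d1' d2') ^ 2) / Rpower (1/2) (2 * d2).

Lemma alpha_pos d : d < 1 -> 0 < alpha d.
Proof. intros. unfold alpha. apply Rinv_0_lt_compat. lra. Qed.

Lemma x1_const_pos : 0 < x1_const.
Proof.
  unfold x1_const. assert (0 < / q) by (apply Rinv_0_lt_compat; lra).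
  assert (0 <= Rpower T (alpha d1') ^ 2) by apply pow2_ge_0.
  apply Rmult_lt_0_compat; lra.
Qed.

Lemma x2_const_pos : 0 < x2_const.
Proof.
  unfold x2_const. apply Rdiv_lt_0_compat; [|apply rp_pos].
  assert (0 <= Rpower T (betaexp d1' d2') ^ 2) by apply pow2_ge_0. lra.
Qed.

Lemma x1_scaling_small t : 0 < t <= 1 ->
  16 * radA d1 d1' t * (Rpower (radA d1 d1' t) q / q + radA d1 d1' t) <= 16 * (/ q + 1) * t ^ 2.
Proof.
  intros Ht. set (a := radA d1 d1' t).
  assert (Ea : a = Rpower t (alpha d1)) by (unfold a, radA; apply bpow_le1; lra).
  assert (Ha : 0 < a) by (rewrite Ea; apply rp_pos).
  assert (a1 : a <= 1) by (rewrite Ea; apply rp_le1; [lra | left; apply alpha_pos; lra]).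
  assert (E2 : a * Rpower a q = t ^ 2).
  { rewrite <- (Rpower_1 a) at 1 by lra. rewrite <- Rpower_plus, Ea, Rpower_mult.
    replace (alpha d1 * (1 + q)) with 2 by (unfold alpha, q; field; lra). apply rp_sq; lra. }
  assert (a * a <= a * Rpower a q) by (apply Rmult_le_compat_l; [lra | apply rp_le_base; lra]).
  replace (16 * a * (Rpower a q / q + a)) with (16 * (/ q * (a * Rpower a q) + a * a))
    by (field; lra).
  rewrite E2. assert (0 < / q) by (apply Rinv_0_lt_compat; lra). nra.
Qed.

Lemma x1_scaling_large t : 1 < t <= T ->
  16 * radA d1 d1' t * (Rpower (radA d1 d1' t) q / q + radA d1 d1' t)
  <= 16 * (/ q + 1) * Rpower T (alpha d1') ^ 2.
Proof.
  intros Ht. set (a := radA d1 d1' t).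
  assert (Ea : a = Rpower t (alpha d1')) by (unfold a, radA; apply bpow_gt1; lra).
  assert (Hal := alpha_pos d1' ltac:(lra)).
  assert (a1 : 1 <= a) by (rewrite Ea; apply rp_ge1; lra).
  assert (aT : a <= Rpower T (alpha d1')) by (rewrite Ea; apply Rle_Rpower_l; lra).
  assert (Rpower a q <= a) by (apply rp_ge_base; lra).
  assert (0 < / q) by (apply Rinv_0_lt_compat; lra).
  assert (Rpower a q / q <= a / q) by (unfold Rdiv; apply Rmult_le_compat_r; lra).
  assert (a * a <= Rpower T (alpha d1') ^ 2) by nra.
  unfold Rdiv in *. nra.
Qed.

Lemma x1_scaling t : 0 < t <= T ->
  16 * radA d1 d1' t * (Rpower (radA d1 d1' t) q / q + radA d1 d1' t) <= x1_const * t ^ 2.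
Proof.
  intros Ht. unfold x1_const. assert (0 < / q) by (apply Rinv_0_lt_compat; lra).
  assert (0 <= Rpower T (alpha d1') ^ 2) by apply pow2_ge_0.
  destruct (Rle_dec t 1) as [H1|H1].
  - eapply Rle_trans; [apply x1_scaling_small; lra|].
    assert (0 <= t ^ 2) by apply pow2_ge_0. nra.
  - eapply Rle_trans; [apply x1_scaling_large; lra|].
    assert (1 <= t ^ 2) by (apply Rnot_le_lt in H1; nra).
    apply Rle_trans with (16 * (/ q + 1) * (1 + Rpower T (alpha d1') ^ 2)); [nra|].
    rewrite <- (Rmult_1_r (16 * (/ q + 1) * _)) at 1.
    apply Rmult_le_compat_l; [apply Rmult_le_pos|]; lra.
Qed.

Lemma x2_scaling_small t : 0 < t <= 1 ->
  radB d1 d1' d2 d2' t ^ 2 / Rpower (Rmin (radA d1 d1' t / 2) (1 / 2)) (2 * d2)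
  = t ^ 2 / Rpower (1/2) (2 * d2).
Proof.
  intros Ht. set (a := radA d1 d1' t). set (b := radB d1 d1' d2 d2' t).
  assert (Ea : a = Rpower t (alpha d1)) by (unfold a, radA; apply bpow_le1; lra).
  assert (Eb : b = Rpower t (betaexp d1 d2)) by (unfold b, radB; apply bpow_le1; lra).
  assert (a1 : a <= 1) by (rewrite Ea; apply rp_le1; [lra | left; apply alpha_pos; lra]).
  rewrite Rmin_left by lra.
  replace (a / 2) with (a * (1/2)) by field.
  rewrite <- Rpower_mult_distr by (try rewrite Ea; try apply rp_pos; lra).
  assert (Eb2 : b ^ 2 = Rpower t (alpha d1 * (2 * d2)) * t ^ 2).
  { rewrite Eb, <- (rp_sq (Rpower t (betaexp d1 d2))), Rpower_mult by apply rp_pos.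
    rewrite <- (rp_sq t), <- Rpower_plus by lra. f_equal. unfold betaexp, alpha. field. lra. }
  rewrite Eb2, Ea, Rpower_mult.
  assert (P1 := rp_pos t (alpha d1 * (2 * d2))). assert (P2 := rp_pos (1/2) (2 * d2)).
  field. lra.
Qed.

Lemma x2_scaling_large t : 1 < t <= T ->
  radB d1 d1' d2 d2' t ^ 2 / Rpower (Rmin (radA d1 d1' t / 2) (1 / 2)) (2 * d2)
  <= Rpower T (betaexp d1' d2') ^ 2 / Rpower (1/2) (2 * d2).
Proof.
  intros Ht. set (a := radA d1 d1' t). set (b := radB d1 d1' d2 d2' t).
  assert (Ea : a = Rpower t (alpha d1')) by (unfold a, radA; apply bpow_gt1; lra).
  assert (Eb : b = Rpower t (betaexp d1' d2')) by (unfold b, radB; apply bpow_gt1; lra).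
  assert (Hal := alpha_pos d1' ltac:(lra)).
  assert (Hbe : 0 <= betaexp d1' d2') by (unfold betaexp; apply Rmult_le_pos; lra).
  assert (a1 : 1 <= a) by (rewrite Ea; apply rp_ge1; lra).
  rewrite Rmin_right by lra.
  assert (bT : b <= Rpower T (betaexp d1' d2')) by (rewrite Eb; apply Rle_Rpower_l; lra).
  assert (0 < b) by (rewrite Eb; apply rp_pos).
  unfold Rdiv. apply Rmult_le_compat_r.
  - left. apply Rinv_0_lt_compat, rp_pos.
  - apply pow_incr. lra.
Qed.

Lemma x2_scaling t : 0 < t <= T ->
  radB d1 d1' d2 d2' t ^ 2 / Rpower (Rmin (radA d1 d1' t / 2) (1 / 2)) (2 * d2)
  <= x2_const * t ^ 2.
Proof.
  intros Ht. unfold x2_const.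
  assert (0 < / Rpower (1/2) (2 * d2)) by (apply Rinv_0_lt_compat, rp_pos).
  assert (0 <= Rpower T (betaexp d1' d2') ^ 2) by apply pow2_ge_0.
  destruct (Rle_dec t 1) as [H1|H1].
  - rewrite x2_scaling_small by lra. assert (0 <= t ^ 2) by apply pow2_ge_0.
    assert (0 <= Rpower T (betaexp d1' d2') ^ 2 * / Rpower (1/2) (2 * d2) * t ^ 2)
      by (apply Rmult_le_pos; [apply Rmult_le_pos|]; lra).
    unfold Rdiv in *. nra.
  - eapply Rle_trans; [apply x2_scaling_large; lra|].
    assert (1 <= t ^ 2) by (apply Rnot_le_lt in H1; nra).
    unfold Rdiv. rewrite <- (Rmult_1_r (_ * / Rpower (1/2) (2 * d2))) at 1.
    apply Rmult_le_compat; try lra. apply Rmult_le_pos; lra.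
Qed.

End Scaling.

Lemma Gamma_split m phi D d1 d1' d2 d2' a b x : C1c m phi D ->
  0 <= d1 < 1 / 2 -> 0 <= d2 ->
  IB (box_lo a b) (box_hi a b) 0 (S m) (Gamma m d1 d1' d2 d2' D) x
  = IB (box_lo a b) (box_hi a b) 0 (S m) (x1_energy D d1 d1') x
    + IB (box_lo a b) (box_hi a b) 0 (S m) (x2_energy m D d2 d2') x.
Proof.
  intros HC Hd1 Hd2.
  rewrite <- (IB_plus m) by (lia || apply (x1_energy_Cont m phi D HC d1 d1' Hd1)
                                  || apply (x2_energy_Cont m phi D HC d2 d2' Hd2)).
  apply IB_ext. intros y _. unfold Gamma, x1_energy, x2_energy, wt.
  rewrite (tail_energy_sum1 m D). reflexivity.
Qed.

Definition poincare_C_const (m : nat) (d1 d1' d2 d2' T : R) :=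
  x1_const d1 d1' T + 8 * poincare_const m * x2_const d1' d2 d2' T.

Lemma poincare_C_const_pos m d1 d1' d2 d2' T : 0 <= d1 < 1 / 2 ->
  0 < poincare_C_const m d1 d1' d2 d2' T.
Proof.
  intros Hd1. unfold poincare_C_const.
  assert (0 < 8 * poincare_const m * x2_const d1' d2 d2' T)
    by (apply Rmult_lt_0_compat; [apply Rmult_lt_0_compat; [lra | apply poincare_const_pos]
                                 | apply x2_const_pos]).
  assert (P1 := x1_const_pos d1 d1' T Hd1). lra.
Qed.

Lemma variance_on_C_t m d1 d1' d2 d2' T phi D t :
  0 <= d1 < 1 / 2 -> 1 / 2 <= d1' < 1 -> 0 <= d2 -> 0 <= d2' -> C1c m phi D -> 0 < t <= T ->
  IntC m d1 d1' d2 d2' t (fun x => (phi x - IntC m d1 d1' d2 d2' t phi / volC m d1 d1' d2 d2' t) ^ 2)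
  <= poincare_C_const m d1 d1' d2 d2' T * t ^ 2 * IntC m d1 d1' d2 d2' t (Gamma m d1 d1' d2 d2' D).
Proof.
  intros Hd1 Hd1' Hd2 Hd2' HC Ht.
  assert (Ha : 0 < radA d1 d1' t) by (apply bpow_pos; lra).
  assert (Hb : 0 < radB d1 d1' d2 d2' t) by (apply bpow_pos; lra).
  unfold IntC, volC. rewrite !IntBox_IB.
  change (fun i : nat => if Nat.eq_dec i 0 then - radA d1 d1' t else - radB d1 d1' d2 d2' t)
    with (box_lo (radA d1 d1' t) (radB d1 d1' d2 d2' t)).
  change (fun i : nat => if Nat.eq_dec i 0 then radA d1 d1' t else radB d1 d1' d2 d2' t)
    with (box_hi (radA d1 d1' t) (radB d1 d1' d2 d2' t)).
  rewrite (Gamma_split m phi) by auto.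
  eapply Rle_trans; [apply (weighted_box_variance m phi D HC d1 d1' d2 d2'); auto; lra|].
  set (I1 := IB _ _ 0 (S m) (x1_energy D d1 d1') _).
  set (I2 := IB _ _ 0 (S m) (x2_energy m D d2 d2') _).
  assert (N1 : 0 <= I1) by (apply (IB_nonneg m); [apply box_lo_hi; auto | lia |
                              apply (x1_energy_Cont m phi); auto; lra | apply x1_energy_nonneg]).
  assert (N2 : 0 <= I2) by (apply (IB_nonneg m); [apply box_lo_hi; auto | lia |
                              apply (x2_energy_Cont m phi); auto; lra | apply x2_energy_nonneg]).
  assert (S1 := x1_scaling d1 d1' T Hd1 Hd1' t Ht).
  assert (S2 := x2_scaling d1 d1' d2 d2' T Hd1 Hd1' Hd2' t Ht).
  assert (HK := poincare_const_pos m).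
  assert (P1 := x1_const_pos d1 d1' T Hd1). assert (P2 := x2_const_pos d1' d2 d2' T).
  assert (Ht2 : 0 <= t ^ 2) by apply pow2_ge_0.
  apply Rmult_le_compat_r with (r := I1) in S1; auto.
  apply Rmult_le_compat_r with (r := I2) in S2; auto.
  apply Rmult_le_compat_l with (r := 8 * poincare_const m) in S2; [|lra].
  assert (0 <= x1_const d1 d1' T * t ^ 2 * I2)
    by (apply Rmult_le_pos; [apply Rmult_le_pos|]; lra).
  assert (0 <= 8 * poincare_const m * (x2_const d1' d2 d2' T * t ^ 2 * I1))
    by (apply Rmult_le_pos; [|apply Rmult_le_pos; [apply Rmult_le_pos|]]; lra).
  unfold poincare_C_const, Rdiv in *. lra.
Qed.

Theorem proposition5p2 (m : nat) (d1 d1' d2 d2' : R) :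
  (1 <= m)%nat ->
  0 <= d1 < 1 / 2 -> 1 / 2 <= d1' < 1 -> 0 <= d2 -> 0 <= d2' ->
  forall T : R, 0 < T ->
  exists lam : R, 0 < lam /\
    forall (phi : (nat -> R) -> R) (D : nat -> (nat -> R) -> R),
      C1c m phi D ->
      forall t : R, 0 < t <= T ->
        IntC m d1 d1' d2 d2' t (Gamma m d1 d1' d2 d2' D) >=
        lam * / t ^ 2 *
        IntC m d1 d1' d2 d2' t
          (fun x => (phi x - IntC m d1 d1' d2 d2' t phi
                             / volC m d1 d1' d2 d2' t) ^ 2).
Proof.
  intros _ Hd1 Hd1' Hd2 Hd2' T _.
  set (C := poincare_C_const m d1 d1' d2 d2' T).
  assert (HC : 0 < C) by (apply poincare_C_const_pos; auto).
  exists (/ C). split; [apply Rinv_0_lt_compat; exact HC|].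
  intros phi D HphiD t Ht.
  assert (Ht2 : 0 < t ^ 2) by (apply pow_lt; lra).
  assert (V := variance_on_C_t m d1 d1' d2 d2' T phi D t Hd1 Hd1' Hd2 Hd2' HphiD Ht).
  fold C in V. apply Rle_ge.
  apply (Rmult_le_reg_l (C * t ^ 2)); [apply Rmult_lt_0_compat; auto|].
  replace (C * t ^ 2 * (/ C * / t ^ 2 * _)) with (IntC m d1 d1' d2 d2' t
          (fun x => (phi x - IntC m d1 d1' d2 d2' t phi / volC m d1 d1' d2 d2' t) ^ 2))
    by (field; lra).
  exact V.
Qed.
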